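(* Let $M$ be an $m\times n$ $0/1$-matrix. Let $B_v$ and $B_w$ be two blocks of $M$ each consisting of all $m$ rows, where $B_v$ consists of columns $s_1,\ldots,s_2$ and $B_w$ of columns $s_2,\ldots,s_3$ (so they share exactly column $s_2$), and let $B_y$ be the block consisting of all rows and columns $s_1,\ldots,s_3$. Given $\bar{\Phi}(B_v)$ and $\bar{\Phi}(B_w)$, the data structure $\bar{\Phi}(B_y)$ can be computed in $O(m)$ time.
   Context: Entries of $M$ are indexed $(a,b)$, rows increasing from bottom to top, columns left to right. A path from $(k,l)$ to $(i,j)$ is a sequence of $1$-entries starting at $(k,l)$ and ending at $(i,j)$ in which each step goes from $(a,b)$ to $(a+1,b)$, $(a,b+1)$ or $(a+1,b+1)$; $(i,j)$ is reachable from $(k,l)$ if such a path exists. For a block $B$ (submatrix of contiguous rows and columns $s^-\le b\le s^+$), its left vertical boundary $\bar{B}^-$ is the set of entries of column $s^-$ in $B$ and its right vertical boundary $\bar{B}^+$ the set of entries of column $s^+$ in $B$, each ordered by increasing row. The data structure $\bar{\Phi}(B)$ stores: (1) for each $1$-entry $i$ of $\bar{B}^-$, the first entry $\bar{\sigma}_A(i)$ and the last entry $\bar{\sigma}_Z(i)$ of $\bar{B}^+$ reachable from $i$; (2) for each $1$-entry $j$ of $\bar{B}^+$, a flag $\bar{f}(j)$ indicating whether $j$ is reachable from some entry of $\bar{B}^-$, a list $\bar{L}_A(j)$ of the $1$-entries $i\in\bar{B}^-$ with $\bar{\sigma}_A(i)=j$, and a list $\bar{L}_Z(j)$ of the $1$-entries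 $i\in\bar{B}^-$ with $\bar{\sigma}_Z(i)=j$. Running time is in the RAM model. *)

From Stdlib Require Import Arith List.
Import ListNotations.

(* M : nat -> nat -> bool, entry (a,b) = M a b (row a, column b);       *)
(* rows 0..m-1 (increasing bottom to top), columns 0..n-1.             *)
Inductive reach (M : nat -> nat -> bool) (m n : nat)
  : nat -> nat -> nat -> nat -> Prop :=
| reach_refl a b :
    a < m -> b < n -> M a b = true -> reach M m n a b a b
| reach_step a b a' b' c d :
    a < m -> b < n -> M a b = true ->
    ((a' = S a /\ b' = b) \/ (a' = a /\ b' = S b) \/ (a' = S a /\ b' = S b)) ->
    reach M m n a' b' c d -> reach M m n a b c d.

(* For the block of all rows and columns lo..hi (lo <= hi), a path from
   column lo to column hi stays within columns lo..hi (steps are monotone),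
   so reachability inside the block is reach with those endpoints. *)

Definition SigmaA M m n lo hi (i j : nat) : Prop :=
  j < m /\ reach M m n i lo j hi /\
  (forall j', j' < j -> ~ reach M m n i lo j' hi).

Definition SigmaZ M m n lo hi (i j : nat) : Prop :=
  j < m /\ reach M m n i lo j hi /\
  (forall j', j < j' -> j' < m -> ~ reach M m n i lo j' hi).

(* Unit-cost RAM (word RAM with unbounded words, +, truncated -,        *)
(* indirect addressing, conditional jump).  Memory: nat -> nat.         *)
Inductive instr : Type :=
| IConst (d k : nat)
| IAdd (d a b : nat)
| ISub (d a b : nat)
| ILoad (d a : nat)
| IStore (a b : nat)
| IJz (a l : nat)
| IJmp (l : nat)
| IHalt.

Definition memory := nat -> nat.
Definition state := (nat * memory)%type.

Definition upd (mem : memory) (a v : nat) : memory :=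
  fun x => if Nat.eqb x a then v else mem x.

(* one step, costing one time unit; None if halted or crashed *)
Definition step (P : list instr) (st : state) : option state :=
  let (pc, mem) := st in
  match nth_error P pc with
  | Some (IConst d k) => Some (S pc, upd mem d k)
  | Some (IAdd d a b) => Some (S pc, upd mem d (mem a + mem b))
  | Some (ISub d a b) => Some (S pc, upd mem d (mem a - mem b))
  | Some (ILoad d a) => Some (S pc, upd mem d (mem (mem a)))
  | Some (IStore a b) => Some (S pc, upd mem (mem a) (mem b))
  | Some (IJz a l) => Some (if Nat.eqb (mem a) 0 then l else S pc, mem)
  | Some (IJmp l) => Some (l, mem)
  | Some IHalt => None
  | None => None
  end.

Fixpoint run (P : list instr) (t : nat) (st : state) : option state :=
  match t with
  | 0 => Some st
  | S t' => match step P st with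
            | Some st' => run P t' st'
            | None => None
            end
  end.

Definition halts_in (P : list instr) (mem0 : memory) (t : nat) (mem' : memory)
  : Prop :=
  exists pc, run P t (0, mem0) = Some (pc, mem') /\ nth_error P pc = Some IHalt.

(* Memory encoding of Phibar(B) for the block B = all m rows, columns   *)
(* lo..hi, stored from base address p: 7 cells per row r < m:           *)
(*   p+7r   : sigma_A(r) + 1, or 0 if undefined                         *)
(*   p+7r+1 : sigma_Z(r) + 1, or 0 if undefined                         *)
(*   p+7r+2 : flag fbar(r) (1 = reachable from left boundary, else 0)  *)
(*   p+7r+3 : head pointer of list L_A(r)   (0 = nil, i+1 = node i)     *)
(*   p+7r+4 : head pointer of list L_Z(r)                               *)
(*   p+7r+5 : next pointer of node r in its L_A list                    *)
(*   p+7r+6 : next pointer of node r in its L_Z list                    *)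
(* Lists may be in any order.                                           *)
Inductive LList (mem : memory) (m p off : nat) : nat -> list nat -> Prop :=
| LL_nil : LList mem m p off 0 []
| LL_cons i s : i < m ->
    LList mem m p off (mem (p + 7 * i + off)) s ->
    LList mem m p off (S i) (i :: s).

Definition OptEnc (R : nat -> Prop) (v : nat) : Prop :=
  (v = 0 /\ forall j, ~ R j) \/ (exists j, v = S j /\ R j).

Definition ListEnc (mem : memory) (m p off head : nat) (Q : nat -> Prop) : Prop :=
  exists s, LList mem m p off (mem head) s /\ NoDup s /\
            forall i, In i s <-> Q i.

Definition EncPhi (mem : memory) (p : nat)
  (M : nat -> nat -> bool) (m n lo hi : nat) : Prop :=
  forall r, r < m ->
    OptEnc (SigmaA M m n lo hi r) (mem (p + 7 * r)) /\
    OptEnc (SigmaZ M m n lo hi r) (mem (p + 7 * r + 1)) /\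
    ((mem (p + 7 * r + 2) = 1 /\ exists i, i < m /\ reach M m n i lo r hi) \/
     (mem (p + 7 * r + 2) = 0 /\ ~ exists i, i < m /\ reach M m n i lo r hi)) /\
    ListEnc mem m p 5 (p + 7 * r + 3)
      (fun i => i < m /\ M i lo = true /\ SigmaA M m n lo hi i r) /\
    ListEnc mem m p 6 (p + 7 * r + 4)
      (fun i => i < m /\ M i lo = true /\ SigmaZ M m n lo hi i r).

From Stdlib Require Import Arith Bool List Lia Classical FunctionalExtensionality.
Import ListNotations.

(* Every step of a path is monotone, so a path of B_y from column s1 to column
   s3 crosses column s2.  Two paths between the same two columns that start in
   one vertical order and end in the other must share an entry; hence the
   entries of the right boundary reachable from a left entry i are exactly the
   entries between sigma_A(i) and sigma_Z(i) that are reachable from some left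
   entry at all.

   Call an entry k of column s2 a connector when fbar_v(k) holds and k reaches
   the right boundary of B_w.  Then i reaches j in B_y iff some connector k in
   [sigma_A^v(i), sigma_Z^v(i)] reaches j in B_w.  So sigma_A^y(i) is sigma_A^w
   of the first connector at or above sigma_A^v(i), provided it lies at or below
   sigma_Z^v(i), sigma_Z^y(i) is sigma_Z^w of the last connector at or below
   sigma_Z^v(i), and
   fbar_y(j) holds iff fbar_w(j) holds and j lies in [sigma_A^w(k), sigma_Z^w(k)]
   for some connector k.  A RAM program computes next/previous-connector
   pointers by two scans, the flags by a prefix maximum of sigma_Z^w over the
   connectors bucketed by sigma_A^w, and then fills in sigma_A^y, sigma_Z^y and
   the lists row by row; each of its four passes costs O(1) per row. *)

Lemma reach_bounds M m n a b c d : reach M m n a b c d ->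
  a <= c /\ b <= d /\ a < m /\ b < n /\ M a b = true /\ c < m /\ d < n /\ M c d = true.
Proof.
  induction 1 as [a b Ha Hb HM|a b a' b' c d Ha Hb HM Hs Hr IH]; [repeat split; auto; lia|].
  destruct IH as (?&?&?&?&?&?&?&?). repeat split; try lia; auto.
Qed.

Lemma reach_trans M m n a b c d e f : reach M m n a b c d -> reach M m n c d e f -> reach M m n a b e f.
Proof.
  induction 1; intros HH; auto. eapply reach_step; eauto.
Qed.

Lemma reach_through_column M m n a b c d s : reach M m n a b c d -> b <= s <= d ->
  exists x, reach M m n a b x s /\ reach M m n x s c d.
Proof.
  induction 1 as [a b Ha Hb HM|a b a' b' c d Ha Hb HM Hs Hr IH]; intros Hbs.
  - assert (s = b) by lia; subst. exists a. split; constructor; auto.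
  - destruct (Nat.eq_dec s b) as [->|Hne].
    + exists a. split; [constructor; auto| eapply reach_step; eauto].
    + pose proof (reach_bounds _ _ _ _ _ _ _ Hr).
      destruct IH as [x [H1 H2]]; [lia|]. exists x; split; auto. eapply reach_step; eauto.
Qed.

(* Path 1 starts weakly below path 2, in the same column or one to its right,
   and ends weakly above it; advancing the path that lags behind, the two meet.
   N bounds the remaining length of both paths. *)
Lemma reach_meet M m n hi : forall N a1 b1 a2 b2 j1 j2,
  (j1 - a1) + (hi - b1) + (j2 - a2) + (hi - b2) <= N ->
  reach M m n a1 b1 j1 hi -> reach M m n a2 b2 j2 hi ->
  b2 <= b1 <= S b2 -> a1 <= a2 -> j2 <= j1 ->
  exists x y, reach M m n a1 b1 x y /\ reach M m n x y j1 hi /\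
              reach M m n a2 b2 x y /\ reach M m n x y j2 hi.
Proof.
  induction N; intros a1 b1 a2 b2 j1 j2 HN H1 H2 Hb Ha Hj;
  pose proof (reach_bounds _ _ _ _ _ _ _ H1) as P1;
  pose proof (reach_bounds _ _ _ _ _ _ _ H2) as P2.
  - assert (a1 = j1 /\ b1 = hi /\ a2 = j2 /\ b2 = hi) by lia.
    destruct H as (->&->&->&->). exists j1, hi. assert (j1 = j2) by lia. subst.
    repeat split; auto.
  - destruct (Nat.eq_dec b1 b2) as [Eb|Eb].
    + subst b2. destruct (Nat.eq_dec a1 a2) as [->|Ea].
      * exists a2, b1. repeat split; auto; constructor; tauto.
      * inversion H1 as [|? ? a' b' ? ? ? ? ? Hs H7]; subst.
        -- lia.
        -- pose proof (reach_bounds _ _ _ _ _ _ _ H7).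
           destruct (IHN a' b' a2 b1 j1 j2) as (x&y&Q1&Q2&Q3&Q4); auto; try lia.
           exists x, y. repeat split; auto. eapply reach_step; eauto.
    + assert (b1 = S b2) by lia. subst b1. inversion H2 as [|? ? a' b' ? ? ? ? ? Hs H7]; subst.
      * lia.
      * pose proof (reach_bounds _ _ _ _ _ _ _ H7).
        destruct (IHN a1 (S b2) a' b' j1 j2) as (x&y&Q1&Q2&Q3&Q4); auto; try lia.
        exists x, y. repeat split; auto. eapply reach_step; eauto.
Qed.

Lemma reach_exchange M m n lo hi i1 i2 j1 j2 :
  reach M m n i1 lo j1 hi -> reach M m n i2 lo j2 hi -> i1 <= i2 -> j2 <= j1 ->
  reach M m n i1 lo j2 hi /\ reach M m n i2 lo j1 hi.
Proof.
  intros H1 H2 Hi Hj.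
  destruct (reach_meet M m n hi _ i1 lo i2 lo j1 j2 (le_n _) H1 H2) as (x&y&Q1&Q2&Q3&Q4); try lia.
  split; eapply reach_trans; eauto.
Qed.

Lemma SigmaA_unique M m n lo hi i j j' : SigmaA M m n lo hi i j -> SigmaA M m n lo hi i j' -> j = j'.
Proof.
  intros (H1&H2&H3) (H1'&H2'&H3').
  destruct (lt_eq_lt_dec j j') as [[H|H]|H]; auto; exfalso; [eapply H3'|eapply H3]; eauto.
Qed.

Lemma SigmaZ_unique M m n lo hi i j j' : SigmaZ M m n lo hi i j -> SigmaZ M m n lo hi i j' -> j = j'.
Proof.
  intros (H1&H2&H3) (H1'&H2'&H3').
  destruct (lt_eq_lt_dec j j') as [[H|H]|H]; auto; exfalso; [eapply H3|eapply H3']; eauto.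
Qed.

Lemma ex_least (P : nat -> Prop) : forall N, (exists j, j <= N /\ P j) ->
  exists j, P j /\ forall j', j' < j -> ~ P j'.
Proof.
  induction N; intros [j [Hj HP]].
  - exists j. split; auto. intros; lia.
  - destruct (classic (exists j, j <= N /\ P j)) as [Hc|Hc]; [apply IHN; auto|].
    exists j. split; auto. intros j' Hj' HP'. apply Hc. exists j'. split; auto.
    assert (j' <= N \/ j' = S N) as [|] by lia; auto. subst. lia.
Qed.

Lemma ex_greatest_lt (P : nat -> Prop) : forall N, (exists j, j < N /\ P j) ->
  exists j, j < N /\ P j /\ forall j', j < j' -> j' < N -> ~ P j'.
Proof.
  induction N; intros [j [Hj HP]]; [lia|].
  destruct (classic (P N)) as [Hc|Hc].
  - exists N. repeat split; auto. intros; lia.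
  - destruct (IHN) as [k (Hk1&Hk2&Hk3)].
    + exists j. split; auto. assert (j <> N) by (intro; subst; auto). lia.
    + exists k. repeat split; auto. intros j' H1 H2 HP'.
      assert (j' < N \/ j' = N) as [|] by lia; [eapply Hk3; eauto| subst; auto].
Qed.

Lemma SigmaA_exists M m n lo hi i j : reach M m n i lo j hi -> exists j0, SigmaA M m n lo hi i j0.
Proof.
  intros H. destruct (ex_least (fun j => reach M m n i lo j hi) j) as [j0 [H1 H2]]; eauto.
  exists j0. pose proof (reach_bounds _ _ _ _ _ _ _ H1). split; [lia|split]; auto.
Qed.

Lemma SigmaZ_exists M m n lo hi i j : reach M m n i lo j hi -> exists j0, SigmaZ M m n lo hi i j0.
Proof.
  intros H. pose proof (reach_bounds _ _ _ _ _ _ _ H).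
  destruct (ex_greatest_lt (fun j => reach M m n i lo j hi) m) as [j0 (H1&H2&H3)].
  { exists j. split; [lia|auto]. }
  exists j0. split; auto.
Qed.

Lemma reach_between_sigmas M m n lo hi i a b k i' : SigmaA M m n lo hi i a -> SigmaZ M m n lo hi i b ->
  a <= k <= b -> reach M m n i' lo k hi -> reach M m n i lo k hi.
Proof.
  intros (_&Ha&_) (_&Hb&_) Hk H'.
  destruct (le_lt_dec i' i).
  - apply (reach_exchange _ _ _ _ _ _ _ _ _ H' Ha); lia.
  - apply (reach_exchange _ _ _ _ _ _ _ _ _ Hb H'); lia.
Qed.

Lemma sigmas_bound_reach M m n lo hi i a b k : SigmaA M m n lo hi i a -> SigmaZ M m n lo hi i b ->
  reach M m n i lo k hi -> a <= k <= b.
Proof.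
  intros (_&_&Ha) (_&_&Hb) H. pose proof (reach_bounds _ _ _ _ _ _ _ H).
  split; [destruct (le_lt_dec a k); auto; exfalso; eapply Ha; eauto
         |destruct (le_lt_dec k b); auto; exfalso; eapply Hb; eauto; lia].
Qed.

Lemma reach_through_middle_iff M m n s1 s2 s3 i j : s1 <= s2 -> s2 <= s3 ->
  (reach M m n i s1 j s3 <-> exists k, reach M m n i s1 k s2 /\ reach M m n k s2 j s3).
Proof.
  intros H1 H2. split.
  - intros H. apply reach_through_column; auto.
  - intros [k [Ha Hb]]. eapply reach_trans; eauto.
Qed.

Lemma EncPhi_A_none mem p M m n lo hi r : EncPhi mem p M m n lo hi -> r < m ->
  mem (p + 7 * r) = 0 -> forall j, ~ reach M m n r lo j hi.
Proof.
  intros HE Hr H0 j Hj. destruct (HE r Hr) as [HA _].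
  destruct (SigmaA_exists _ _ _ _ _ _ _ Hj) as [j0 Hj0].
  destruct HA as [[_ HA]|[x [Hx _]]]; [eapply HA; eauto| lia].
Qed.

Lemma EncPhi_A_some mem p M m n lo hi r a : EncPhi mem p M m n lo hi -> r < m ->
  mem (p + 7 * r) = S a -> SigmaA M m n lo hi r a.
Proof.
  intros HE Hr H0. destruct (HE r Hr) as [HA _].
  destruct HA as [[HA _]|[x [Hx HA]]]; [lia|]. rewrite H0 in Hx. injection Hx; intros; subst; auto.
Qed.

Lemma EncPhi_Z_some mem p M m n lo hi r a : EncPhi mem p M m n lo hi -> r < m ->
  mem (p + 7 * r + 1) = S a -> SigmaZ M m n lo hi r a.
Proof.
  intros HE Hr H0. destruct (HE r Hr) as [_ [HA _]].
  destruct HA as [[HA _]|[x [Hx HA]]]; [lia|]. rewrite H0 in Hx. injection Hx; intros; subst; auto.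
Qed.

Lemma EncPhi_A_of_reach mem p M m n lo hi r j : EncPhi mem p M m n lo hi -> r < m ->
  reach M m n r lo j hi -> exists a, mem (p + 7 * r) = S a /\ SigmaA M m n lo hi r a.
Proof.
  intros HE Hr Hj. destruct (HE r Hr) as [HA _].
  destruct (SigmaA_exists _ _ _ _ _ _ _ Hj) as [j0 Hj0].
  destruct HA as [[_ HA]|[x [Hx HA]]]; [exfalso; eapply HA; eauto|eauto].
Qed.

Lemma EncPhi_Z_of_reach mem p M m n lo hi r j : EncPhi mem p M m n lo hi -> r < m ->
  reach M m n r lo j hi -> exists a, mem (p + 7 * r + 1) = S a /\ SigmaZ M m n lo hi r a.
Proof.
  intros HE Hr Hj. destruct (HE r Hr) as [_ [HA _]].
  destruct (SigmaZ_exists _ _ _ _ _ _ _ Hj) as [j0 Hj0].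
  destruct HA as [[_ HA]|[x [Hx HA]]]; [exfalso; eapply HA; eauto|eauto].
Qed.

Lemma EncPhi_flag mem p M m n lo hi r : EncPhi mem p M m n lo hi -> r < m ->
  (mem (p + 7 * r + 2) <> 0 <-> exists i, i < m /\ reach M m n i lo r hi).
Proof.
  intros HE Hr. destruct (HE r Hr) as [_ [_ [HF _]]].
  destruct HF as [[H1 H2]|[H1 H2]]; rewrite H1; split; auto; intros; try lia; contradiction.
Qed.

Lemma EncPhi_entry_le mem p M m n lo hi r : EncPhi mem p M m n lo hi -> r < m ->
  mem (p + 7 * r) <= m /\ mem (p + 7 * r + 1) <= m.
Proof.
  intros HE Hr. destruct (HE r Hr) as (HA&HZ&_).
  split; [destruct HA as [[-> _]|[j [-> (Hj&_)]]]|destruct HZ as [[-> _]|[j [-> (Hj&_)]]]]; lia.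
Qed.

(* Entry k of column s2 is a connector: fbar_v(k) holds and sigma_A^w(k) is
   defined. *)
Definition connectorb (mem0 : memory) m k : bool :=
  negb (mem0 (8 + 7 * k + 2) =? 0) && negb (mem0 (8 + 7 * m + 7 * k) =? 0).

(* Connectors are referred to by the address 8 + 7k of their row of
   Phibar(B_v), and 0 stands for none. *)
Fixpoint prev_connector mem0 m k : nat :=
  match k with 0 => 0 | S k' => if connectorb mem0 m k' then 8 + 7 * k' else prev_connector mem0 m k' end.

Fixpoint next_connector mem0 m k d : nat :=
  match d with 0 => 0 | S d' => if connectorb mem0 m k then 8 + 7 * k else next_connector mem0 m (S k) d' end.

Fixpoint top_from (mem0 : memory) m k d x : nat :=
  match d with 0 => 0
  | S d' => Nat.max (top_from mem0 m (S k) d' x)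
      (if (connectorb mem0 m k && (mem0 (8 + 7 * m + 7 * k) =? S x))%bool then mem0 (8 + 7 * m + 7 * k + 1) else 0)
  end.

Fixpoint top_upto mem0 m j : nat :=
  match j with 0 => 0 | S j' => Nat.max (top_upto mem0 m j') (top_from mem0 m 0 m j') end.

Definition flag_out mem0 m r : nat :=
  if top_upto mem0 m (S r) - r =? 0 then 0 else if mem0 (8 + 7 * m + 7 * r + 2) =? 0 then 0 else 1.

(* The truncated difference vanishes iff the first connector at or above
   sigma_A^v(i) lies at or below sigma_Z^v(i). *)
Definition sigmaA_out mem0 m i : nat :=
  match mem0 (8 + 7 * i) with 0 => 0
  | S a => let N := next_connector mem0 m a (m - a) in
      if N =? 0 then 0 else if N - (7 * mem0 (8 + 7 * i + 1) + 1) =? 0 then mem0 (N + 7 * m) else 0 end.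

Definition sigmaZ_out mem0 m i : nat :=
  match mem0 (8 + 7 * i) with 0 => 0
  | S a => let N := next_connector mem0 m a (m - a) in
      if N =? 0 then 0 else if N - (7 * mem0 (8 + 7 * i + 1) + 1) =? 0
        then mem0 (prev_connector mem0 m (mem0 (8 + 7 * i + 1)) + 7 * m + 1) else 0 end.

Definition preimage_list (f : nat -> nat) i j : list nat := rev (filter (fun r => f r =? S j) (seq 0 i)).

Lemma next_connector_spec mem0 m d : forall k,
  (next_connector mem0 m k d = 0 /\ forall r, k <= r < k + d -> connectorb mem0 m r = false) \/
  (exists k1, k <= k1 < k + d /\ connectorb mem0 m k1 = true /\ next_connector mem0 m k d = 8 + 7 * k1 /\
     forall r, k <= r < k1 -> connectorb mem0 m r = false).
Proof.
  induction d; intros k.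
  - left. split; auto. intros; lia.
  - simpl. destruct (connectorb mem0 m k) eqn:G.
    + right. exists k. repeat split; auto; try lia.
    + destruct (IHd (S k)) as [[H1 H2]|[k1 (H1&H2&H3&H4)]].
      * left. split; auto. intros r Hr. destruct (Nat.eq_dec r k); [subst; auto|apply H2; lia].
      * right. exists k1. repeat split; auto; try lia.
        intros r Hr. destruct (Nat.eq_dec r k); [subst; auto|apply H4; lia].
Qed.

Lemma prev_connector_spec mem0 m b :
  (prev_connector mem0 m b = 0 /\ forall r, r < b -> connectorb mem0 m r = false) \/
  (exists kz, kz < b /\ connectorb mem0 m kz = true /\ prev_connector mem0 m b = 8 + 7 * kz /\
     forall r, kz < r < b -> connectorb mem0 m r = false).
Proof.
  induction b.
  - left. split; auto. intros; lia.
  - simpl. destruct (connectorb mem0 m b) eqn:G.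
    + right. exists b. repeat split; auto; try lia.
    + destruct IHb as [[H1 H2]|[kz (H1&H2&H3&H4)]].
      * left. split; auto. intros r Hr. destruct (Nat.eq_dec r b); [subst; auto|apply H2; lia].
      * right. exists kz. repeat split; auto; try lia.
        intros r Hr. destruct (Nat.eq_dec r b); [subst; auto|apply H4; lia].
Qed.

Lemma preimage_list_S f i j :
  preimage_list f (S i) j = if f i =? S j then i :: preimage_list f i j else preimage_list f i j.
Proof.
  unfold preimage_list. rewrite seq_S, filter_app. simpl. destruct (f i =? S j); simpl; rewrite ?app_nil_r; auto.
  rewrite rev_app_distr. simpl. auto.
Qed.

Lemma in_preimage_list f i j r : In r (preimage_list f i j) <-> r < i /\ f r = S j.
Proof.
  unfold preimage_list. rewrite <- in_rev, filter_In, in_seq, Nat.eqb_eq. lia.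
Qed.

Lemma preimage_list_NoDup f i j : NoDup (preimage_list f i j).
Proof.
  unfold preimage_list. apply NoDup_rev. apply NoDup_filter. apply seq_NoDup.
Qed.

Lemma preimage_list_lt f i j r : In r (preimage_list f i j) -> r < i.
Proof. rewrite in_preimage_list. lia. Qed.

Lemma sigmaA_out_zero mem0 m i : sigmaA_out mem0 m i = 0 -> sigmaZ_out mem0 m i = 0.
Proof.
  unfold sigmaA_out, sigmaZ_out. destruct (mem0 (8 + 7 * i)) as [|a]; auto. cbn zeta.
  destruct (next_connector_spec mem0 m (m - a) a) as [[EN _]|[k1 (Hk1&Gk1&EN&Hmin)]]; rewrite EN; auto.
  destruct (Nat.eqb_spec (8 + 7 * k1) 0); [lia|].
  destruct (Nat.eqb_spec (8 + 7 * k1 - (7 * mem0 (8 + 7 * i + 1) + 1)) 0); auto.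
  intros H. unfold connectorb in Gk1. apply andb_true_iff in Gk1. destruct Gk1 as [_ G].
  apply negb_true_iff, Nat.eqb_neq in G. exfalso. apply G. rewrite <- H. f_equal. lia.
Qed.

Lemma top_from_spec mem0 m x y d : forall k,
  (y < top_from mem0 m k d x <-> exists k', k <= k' < k + d /\ connectorb mem0 m k' = true /\
      mem0 (8 + 7 * m + 7 * k') = S x /\ y < mem0 (8 + 7 * m + 7 * k' + 1)).
Proof.
  induction d; intros k; cbn [top_from].
  - split; [lia|]. intros (k'&?&_). lia.
  - rewrite Nat.max_lt_iff, IHd. split.
    + intros [(k'&H1&H2&H3&H4)|H].
      * exists k'. repeat split; auto; lia.
      * destruct (connectorb mem0 m k) eqn:G; [|simpl in H; lia].
        destruct (Nat.eqb_spec (mem0 (8 + 7 * m + 7 * k)) (S x)); [|simpl in H; lia].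
        simpl in H. exists k. repeat split; auto; lia.
    + intros (k'&H1&H2&H3&H4). destruct (Nat.eq_dec k' k) as [->|Hne].
      * right. rewrite H2, H3, Nat.eqb_refl. simpl. auto.
      * left. exists k'. repeat split; auto; lia.
Qed.

Lemma top_upto_spec mem0 m y j : y < top_upto mem0 m j <-> exists x, x < j /\ y < top_from mem0 m 0 m x.
Proof.
  induction j; cbn [top_upto].
  - split; [lia|]. intros (x&?&_); lia.
  - rewrite Nat.max_lt_iff, IHj. split.
    + intros [(x&H1&H2)|H]; [exists x; split; auto; lia|exists j; split; auto].
    + intros (x&H1&H2). destruct (Nat.eq_dec x j) as [->|]; [right; auto|left; exists x; split; auto; lia].
Qed.

Definition WBound (mem0 : memory) m : Prop :=
  forall r, r < m -> mem0 (8 + 7 * m + 7 * r) <= m.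

Definition VBound (mem0 : memory) m : Prop :=
  forall r, r < m -> mem0 (8 + 7 * r) <= m /\ mem0 (8 + 7 * r + 1) <= m.

Definition W1Bound (mem0 : memory) m : Prop :=
  forall r, r < m -> mem0 (8 + 7 * m + 7 * r + 1) <= m.

Lemma sigmaA_out_le mem0 m i : WBound mem0 m -> sigmaA_out mem0 m i <= m.
Proof.
  intros HB. unfold sigmaA_out. destruct (mem0 (8 + 7 * i)) as [|a]; [lia|]. cbn zeta.
  destruct (next_connector_spec mem0 m (m - a) a) as [[EN _]|[k1 (Hk1&Gk1&EN&Hmin)]]; rewrite EN; [simpl; lia|].
  destruct (Nat.eqb_spec (8 + 7 * k1) 0); [lia|].
  destruct (_ =? 0); [|lia].
  replace (8 + 7 * k1 + 7 * m) with (8 + 7 * m + 7 * k1) by lia. apply HB. lia.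
Qed.

Lemma sigmaZ_out_le mem0 m i : i < m -> VBound mem0 m -> W1Bound mem0 m -> sigmaZ_out mem0 m i <= m.
Proof.
  intros Hi HV HB. unfold sigmaZ_out. destruct (HV i Hi) as [_ Hb1].
  destruct (mem0 (8 + 7 * i)) as [|a]; [lia|]. cbn zeta.
  destruct (next_connector_spec mem0 m (m - a) a) as [[EN _]|[k1 (Hk1&Gk1&EN&Hmin)]]; rewrite EN; [simpl; lia|].
  destruct (Nat.eqb_spec (8 + 7 * k1) 0); [lia|].
  destruct (_ =? 0) eqn:Ec; [|lia]. apply Nat.eqb_eq in Ec.
  destruct (prev_connector_spec mem0 m (mem0 (8 + 7 * i + 1))) as [[EP HP]|[kz (Hkz&Gkz&EP&_)]]; rewrite EP.
  - rewrite HP in Gk1; [discriminate|lia].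
  - replace (8 + 7 * kz + 7 * m + 1) with (8 + 7 * m + 7 * kz + 1) by lia. apply HB. lia.
Qed.

Lemma sigma_out_spec mem0 m i a b :
  mem0 (8 + 7 * i) = S a -> mem0 (8 + 7 * i + 1) = S b -> b < m ->
  (sigmaA_out mem0 m i = 0 /\ sigmaZ_out mem0 m i = 0 /\
     forall k, a <= k <= b -> connectorb mem0 m k = false) \/
  (exists k1 kz, a <= k1 <= kz /\ kz <= b /\
     connectorb mem0 m k1 = true /\ connectorb mem0 m kz = true /\
     (forall k, a <= k < k1 -> connectorb mem0 m k = false) /\
     (forall k, kz < k <= b -> connectorb mem0 m k = false) /\
     sigmaA_out mem0 m i = mem0 (8 + 7 * m + 7 * k1) /\
     sigmaZ_out mem0 m i = mem0 (8 + 7 * m + 7 * kz + 1)).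
Proof.
  intros Ea Eb Hb. unfold sigmaA_out, sigmaZ_out. rewrite Ea, Eb. cbn zeta.
  destruct (next_connector_spec mem0 m (m - a) a) as [[EN HN]|[k1 (Hk1&Gk1&EN&Hmin)]]; rewrite EN.
  - left. repeat split. intros k Hk. apply HN. lia.
  - destruct (Nat.eqb_spec (8 + 7 * k1) 0); [lia|].
    destruct (Nat.eqb_spec (8 + 7 * k1 - (7 * S b + 1)) 0) as [Ec|Ec].
    + right. destruct (prev_connector_spec mem0 m (S b)) as [[_ HP]|[kz (Hkz&Gkz&EP&Hmax)]].
      { rewrite HP in Gk1; [discriminate|lia]. }
      assert (k1 <= kz) by (destruct (le_lt_dec k1 kz); auto; rewrite Hmax in Gk1; [discriminate|lia]).
      rewrite EP. exists k1, kz. repeat split; auto; try lia.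
      * intros k Hk. apply Hmax. lia.
      * f_equal. lia.
      * f_equal. lia.
    + left. repeat split. intros k Hk. apply Hmin. lia.
Qed.

Definition connector (mem : memory) (m k : nat) : Prop :=
  k < m /\ mem (8 + 7 * k + 2) <> 0 /\ mem (8 + 7 * m + 7 * k) <> 0.

Lemma connectorb_spec mem0 m k : k < m -> (connectorb mem0 m k = true <-> connector mem0 m k).
Proof.
  intros Hk. unfold connectorb, connector. rewrite andb_true_iff, !negb_true_iff, !Nat.eqb_neq. tauto.
Qed.

Lemma no_connector mem0 m a b : b < m -> (forall k, a <= k <= b -> connectorb mem0 m k = false) ->
  forall k, a <= k <= b -> ~ connector mem0 m k.
Proof. intros Hb H k Hk G. rewrite <- connectorb_spec in G by lia. rewrite H in G; [discriminate|lia]. Qed.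

Lemma OptEnc_SigmaA_none M m n lo hi i :
  (forall j, ~ reach M m n i lo j hi) -> OptEnc (SigmaA M m n lo hi i) 0.
Proof. intros H. left. split; auto. intros j (_&Hr&_). eapply H; eauto. Qed.

Lemma OptEnc_SigmaZ_none M m n lo hi i :
  (forall j, ~ reach M m n i lo j hi) -> OptEnc (SigmaZ M m n lo hi i) 0.
Proof. intros H. left. split; auto. intros j (_&Hr&_). eapply H; eauto. Qed.

Lemma ListEnc_preimage_list mem m p off head f (R : nat -> nat -> Prop) (Mi : nat -> Prop) r :
  LList mem m p off (mem head) (preimage_list f m r) ->
  (forall i, i < m -> OptEnc (R i) (f i)) -> (forall i j j', R i j -> R i j' -> j = j') ->
  (forall i j, R i j -> Mi i) ->
  ListEnc mem m p off head (fun i => i < m /\ Mi i /\ R i r).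
Proof.
  intros HL HO HU HM. exists (preimage_list f m r). split; [auto|]. split; [apply preimage_list_NoDup|].
  intros i. rewrite in_preimage_list. split.
  - intros [Hi Hf]. destruct (HO i Hi) as [[E _]|[j [E HR]]]; [lia|].
    rewrite Hf in E. injection E; intros; subst. repeat split; eauto.
  - intros (Hi&_&HR). split; auto. destruct (HO i Hi) as [[E HN]|[j [E HR']]].
    + exfalso. eapply HN; eauto.
    + rewrite E. f_equal. eapply HU; eauto.
Qed.

Definition OutputOK mem0 m (mem : memory) : Prop :=
  forall r, r < m ->
    mem (8 + 14 * m + 7 * r) = sigmaA_out mem0 m r /\
    mem (8 + 14 * m + 7 * r + 1) = sigmaZ_out mem0 m r /\
    mem (8 + 14 * m + 7 * r + 2) = flag_out mem0 m r /\
    LList mem m (8 + 14 * m) 5 (mem (8 + 14 * m + 7 * r + 3)) (preimage_list (sigmaA_out mem0 m) m r) /\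
    LList mem m (8 + 14 * m) 6 (mem (8 + 14 * m + 7 * r + 4)) (preimage_list (sigmaZ_out mem0 m) m r).

Section Composition.

Variables (M : nat -> nat -> bool) (m n s1 s2 s3 : nat) (mem : memory).
Hypotheses (H12 : s1 <= s2) (H23 : s2 <= s3)
  (HV : EncPhi mem 8 M m n s1 s2) (HW : EncPhi mem (8 + 7 * m) M m n s2 s3).

Lemma connector_iff k : k < m ->
  (connector mem m k <-> (exists i, i < m /\ reach M m n i s1 k s2) /\ exists j, reach M m n k s2 j s3).
Proof.
  intros Hk. unfold connector. rewrite <- (EncPhi_flag _ _ _ _ _ _ _ _ HV Hk). split.
  - intros (_&H1&H2). split; auto.
    destruct (mem (8 + 7 * m + 7 * k)) as [|a] eqn:E; [lia|].
    exists a. apply (EncPhi_A_some _ _ _ _ _ _ _ _ _ HW Hk E).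
  - intros (H1&[j Hj]). repeat split; auto.
    destruct (EncPhi_A_of_reach _ _ _ _ _ _ _ _ _ HW Hk Hj) as [a [Ha _]]. lia.
Qed.

Lemma compose_none i : i < m -> mem (8 + 7 * i) = 0 -> forall j, ~ reach M m n i s1 j s3.
Proof.
  intros Hi H0 j Hj. apply (reach_through_middle_iff M m n s1 s2 s3) in Hj; auto. destruct Hj as [k [Hk _]].
  exact (EncPhi_A_none _ _ _ _ _ _ _ _ HV Hi H0 k Hk).
Qed.

Lemma compose_reach_iff i a b j : i < m ->
  mem (8 + 7 * i) = S a -> mem (8 + 7 * i + 1) = S b ->
  (reach M m n i s1 j s3 <-> exists k, a <= k <= b /\ connector mem m k /\ reach M m n k s2 j s3).
Proof.
  intros Hi Ha Hb.
  pose proof (EncPhi_A_some _ _ _ _ _ _ _ _ _ HV Hi Ha) as SA.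
  pose proof (EncPhi_Z_some _ _ _ _ _ _ _ _ _ HV Hi Hb) as SZ.
  rewrite (reach_through_middle_iff M m n s1 s2 s3); auto. split.
  - intros [k [Hk1 Hk2]]. pose proof (reach_bounds _ _ _ _ _ _ _ Hk1).
    exists k. split; [apply (sigmas_bound_reach M m n s1 s2 i a b k SA SZ Hk1)|]. split; auto.
    apply connector_iff; [lia|]. split; eauto.
  - intros [k (Hk&Hg&Hr)]. exists k. split; auto.
    assert (k < m) by (unfold connector in Hg; lia).
    rewrite connector_iff in Hg by auto.
    destruct Hg as [[i' [_ Hi']] _]. eapply reach_between_sigmas; eauto.
Qed.

Lemma compose_empty i a b : i < m ->
  mem (8 + 7 * i) = S a -> mem (8 + 7 * i + 1) = S b ->
  (forall k, a <= k <= b -> ~ connector mem m k) -> forall j, ~ reach M m n i s1 j s3.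
Proof.
  intros Hi Ha Hb Hno j Hr. rewrite (compose_reach_iff i a b j) in Hr by auto.
  destruct Hr as [k (Hk&Hgk&_)]. eapply Hno; eauto.
Qed.

(* An entry below sigma_A^w(k1) reached from a connector above k1 would, by
   exchanging the crossing paths, be reached from k1 itself. *)
Lemma compose_SigmaA i a b k1 x : i < m ->
  mem (8 + 7 * i) = S a -> mem (8 + 7 * i + 1) = S b ->
  a <= k1 <= b -> connector mem m k1 -> (forall k, a <= k < k1 -> ~ connector mem m k) ->
  mem (8 + 7 * m + 7 * k1) = S x -> SigmaA M m n s1 s3 i x.
Proof.
  intros Hi Ha Hb Hk1 Hg Hmin Hx.
  assert (k1 < m) by (unfold connector in Hg; lia).
  pose proof (EncPhi_A_some _ _ _ _ _ _ _ _ _ HW H Hx) as [Hxm [Hr Hmx]].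
  split; auto. split.
  - rewrite (compose_reach_iff i a b x) by auto. eauto.
  - intros j' Hj' Hr'. rewrite (compose_reach_iff i a b j') in Hr' by auto.
    destruct Hr' as [k (Hk&Hgk&Hrk)].
    destruct (le_lt_dec k1 k).
    + apply (Hmx j'); auto. apply (reach_exchange _ _ _ _ _ _ _ _ _ Hr Hrk); lia.
    + apply (Hmin k); auto; lia.
Qed.

Lemma compose_SigmaZ i a b kz z : i < m ->
  mem (8 + 7 * i) = S a -> mem (8 + 7 * i + 1) = S b ->
  a <= kz <= b -> connector mem m kz -> (forall k, kz < k <= b -> ~ connector mem m k) ->
  mem (8 + 7 * m + 7 * kz + 1) = S z -> SigmaZ M m n s1 s3 i z.
Proof.
  intros Hi Ha Hb Hkz Hg Hmax Hz.
  assert (kz < m) by (unfold connector in Hg; lia).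
  pose proof (EncPhi_Z_some _ _ _ _ _ _ _ _ _ HW H Hz) as [Hzm [Hr Hmz]].
  split; auto. split.
  - rewrite (compose_reach_iff i a b z) by auto. eauto.
  - intros j' Hj' Hj'm Hr'. rewrite (compose_reach_iff i a b j') in Hr' by auto.
    destruct Hr' as [k (Hk&Hgk&Hrk)].
    destruct (le_lt_dec k kz).
    + apply (Hmz j'); auto. apply (reach_exchange _ _ _ _ _ _ _ _ _ Hrk Hr); lia.
    + apply (Hmax k); auto; lia.
Qed.

Lemma sigma_out_correct r : r < m ->
  OptEnc (SigmaA M m n s1 s3 r) (sigmaA_out mem m r) /\ OptEnc (SigmaZ M m n s1 s3 r) (sigmaZ_out mem m r).
Proof.
  intros Hr. destruct (mem (8 + 7 * r)) as [|a] eqn:Ea.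
  - assert (Hout : sigmaA_out mem m r = 0 /\ sigmaZ_out mem m r = 0)
      by (unfold sigmaA_out, sigmaZ_out; rewrite Ea; auto).
    destruct Hout as [-> ->]. pose proof (compose_none r Hr Ea).
    split; [apply OptEnc_SigmaA_none|apply OptEnc_SigmaZ_none]; auto.
  - pose proof (EncPhi_A_some _ _ _ _ _ _ _ _ _ HV Hr Ea) as SA.
    destruct (EncPhi_Z_of_reach _ _ _ _ _ _ _ _ _ HV Hr (proj1 (proj2 SA))) as [b [Eb SZ]].
    assert (Hb : b < m) by (destruct SZ; lia).
    destruct (sigma_out_spec mem m r a b Ea Eb Hb)
      as [(-> & -> & Hno)|(k1&kz&Hk1&Hkz&G1&Gz&Hmin&Hmax&->&->)].
    + pose proof (compose_empty r a b Hr Ea Eb (no_connector _ _ _ _ Hb Hno)).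
      split; [apply OptEnc_SigmaA_none|apply OptEnc_SigmaZ_none]; auto.
    + rewrite connectorb_spec in G1, Gz by lia.
      destruct (mem (8 + 7 * m + 7 * k1)) as [|x] eqn:Ex; [destruct G1 as (_&_&?); lia|].
      destruct (mem (8 + 7 * m + 7 * kz)) as [|x'] eqn:Ex'; [destruct Gz as (_&_&?); lia|].
      destruct (EncPhi_Z_of_reach _ _ _ _ _ _ _ _ _ HW (proj1 Gz)
                  (proj1 (proj2 (EncPhi_A_some _ _ _ _ _ _ _ _ _ HW (proj1 Gz) Ex')))) as [z [Ez _]].
      rewrite Ez. split; right; [exists x|exists z]; split; auto.
      * apply (compose_SigmaA r a b k1 x); auto; [lia|].
        intros k Hk. apply (no_connector mem m a (k1 - 1)); [lia| |lia].
        intros k' Hk'. apply Hmin. lia.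
      * apply (compose_SigmaZ r a b kz z); auto; [lia|].
        intros k Hk. apply (no_connector mem m (S kz) b); auto; lia.
Qed.

Lemma compose_flag_iff j : j < m ->
  ((exists i, i < m /\ reach M m n i s1 j s3) <->
   mem (8 + 7 * m + 7 * j + 2) <> 0 /\ exists k, connector mem m k /\
     mem (8 + 7 * m + 7 * k) <= S j /\ S j <= mem (8 + 7 * m + 7 * k + 1)).
Proof.
  intros Hj. split.
  - intros [i [Hi Hr]]. apply (reach_through_middle_iff M m n s1 s2 s3) in Hr; auto.
    destruct Hr as [k [Hrv Hrw]].
    assert (Hk : k < m) by (pose proof (reach_bounds _ _ _ _ _ _ _ Hrv); lia).
    split.
    + apply (EncPhi_flag _ _ _ _ _ _ _ _ HW Hj). exists k; split; [lia|auto].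
    + exists k. split.
      * apply connector_iff; [lia|]. split; eauto.
      * destruct (EncPhi_A_of_reach _ _ _ _ _ _ _ _ _ HW Hk Hrw) as [x [Hx SA]].
        destruct (EncPhi_Z_of_reach _ _ _ _ _ _ _ _ _ HW Hk Hrw) as [z [Hz SZ]].
        rewrite Hx, Hz. pose proof (sigmas_bound_reach _ _ _ _ _ _ _ _ _ SA SZ Hrw). lia.
  - intros [Hf [k (Hg&HA&HZ)]].
    assert (Hk : k < m) by (unfold connector in Hg; lia).
    pose proof Hg as Hg'. rewrite connector_iff in Hg' by auto.
    destruct Hg' as [[i [Hi Hri]] _].
    destruct (mem (8 + 7 * m + 7 * k)) as [|x] eqn:Ex; [unfold connector in Hg; lia|].
    destruct (mem (8 + 7 * m + 7 * k + 1)) as [|z] eqn:Ez; [lia|].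
    pose proof (EncPhi_A_some _ _ _ _ _ _ _ _ _ HW Hk Ex) as SA.
    pose proof (EncPhi_Z_some _ _ _ _ _ _ _ _ _ HW Hk Ez) as SZ.
    apply (EncPhi_flag _ _ _ _ _ _ _ _ HW Hj) in Hf. destruct Hf as [k' [_ Hk']].
    exists i. split; auto. apply (reach_through_middle_iff M m n s1 s2 s3); auto.
    exists k. split; auto. eapply reach_between_sigmas; eauto. lia.
Qed.

(* j lies in [sigma_A^w(k), sigma_Z^w(k)] for some connector k iff
   top_upto (j + 1) exceeds j. *)
Lemma flag_out_correct r : r < m ->
  (flag_out mem m r = 1 /\ exists i, i < m /\ reach M m n i s1 r s3) \/
  (flag_out mem m r = 0 /\ ~ exists i, i < m /\ reach M m n i s1 r s3).
Proof.
  intros Hr. rewrite (compose_flag_iff r Hr).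
  assert (Hc : r < top_upto mem m (S r) <-> exists k, connector mem m k /\
     mem (8 + 7 * m + 7 * k) <= S r /\ S r <= mem (8 + 7 * m + 7 * k + 1)).
  { rewrite top_upto_spec. split.
    - intros (x&Hx&Hz). rewrite top_from_spec in Hz. destruct Hz as (k&Hk&G&E0&E1).
      exists k. rewrite <- connectorb_spec by lia. repeat split; auto; lia.
    - intros (k&G&E0&E1). pose proof G as (Hk&_&Hnz).
      rewrite <- connectorb_spec in G by auto.
      destruct (mem (8 + 7 * m + 7 * k)) as [|x] eqn:Ex; [lia|].
      exists x. split; [lia|]. rewrite top_from_spec. exists k. repeat split; auto; lia. }
  unfold flag_out. destruct (Nat.eqb_spec (top_upto mem m (S r) - r) 0) as [E|E].
  - right. split; auto. intros [_ Hx]. apply Hc in Hx. lia.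
  - destruct (Nat.eqb_spec (mem (8 + 7 * m + 7 * r + 2)) 0) as [E2|E2].
    + right. split; auto. intros [Hx _]. auto.
    + left. split; auto. split; auto. apply Hc. lia.
Qed.

Lemma EncPhi_output mem' : OutputOK mem m mem' -> EncPhi mem' (8 + 14 * m) M m n s1 s3.
Proof.
  intros HO r Hr. destruct (HO r Hr) as (EA&EZ&EF&LA&LZ). rewrite EA, EZ, EF.
  split; [exact (proj1 (sigma_out_correct r Hr))|]. split; [exact (proj2 (sigma_out_correct r Hr))|].
  split; [exact (flag_out_correct r Hr)|]. split.
  - apply (ListEnc_preimage_list _ _ _ _ _ (sigmaA_out mem m) (SigmaA M m n s1 s3) (fun i => M i s1 = true)); auto.
    + intros i Hi. exact (proj1 (sigma_out_correct i Hi)).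
    + intros i j j'. apply SigmaA_unique.
    + intros i j (_&Hr'&_). apply (reach_bounds _ _ _ _ _ _ _ Hr').
  - apply (ListEnc_preimage_list _ _ _ _ _ (sigmaZ_out mem m) (SigmaZ M m n s1 s3) (fun i => M i s1 = true)); auto.
    + intros i Hi. exact (proj2 (sigma_out_correct i Hi)).
    + intros i j j'. apply SigmaZ_unique.
    + intros i j (_&Hr'&_). apply (reach_bounds _ _ _ _ _ _ _ Hr').
Qed.

End Composition.

Lemma LList_frame mem mem' m p off h s i : LList mem m p off h s -> (forall r, In r s -> r < i) ->
  (forall r, r < i -> mem' (p + 7 * r + off) = mem (p + 7 * r + off)) -> LList mem' m p off h s.
Proof.
  induction 1 as [|j s Hj _ IH]; intros Hs Hf; constructor; auto.
  rewrite Hf by (apply Hs; left; auto). apply IH; auto. intros r Hr. apply Hs. right; auto.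
Qed.

Definition runs_within (P : list instr) (n : nat) (st : state) (Q : state -> Prop) : Prop :=
  exists t st', t <= n /\ run P t st = Some st' /\ Q st'.

Lemma run_add P a b st : run P (a + b) st = match run P a st with Some s => run P b s | None => None end.
Proof.
  revert st; induction a; intros st; simpl; auto.
  destruct (step P st); auto.
Qed.

Lemma within_step P n st st' Q : step P st = Some st' -> runs_within P n st' Q -> runs_within P (S n) st Q.
Proof.
  intros Hs (t&s&Ht&Hr&HQ). exists (S t), s. repeat split; auto; try lia.
  simpl. rewrite Hs. auto.
Qed.

Lemma within_ret P n st (Q : state -> Prop) : Q st -> runs_within P n st Q.
Proof. intros. exists 0, st. repeat split; auto; lia. Qed.

Lemma within_seq P n1 n2 st Q :
  runs_within P n1 st (fun s => runs_within P n2 s Q) -> runs_within P (n1 + n2) st Q.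
Proof.
  intros (t&s&Ht&Hr&(t2&s2&Ht2&Hr2&HQ)). exists (t + t2), s2. repeat split; auto; try lia.
  rewrite run_add, Hr. auto.
Qed.

Lemma within_mono P n n' st (Q Q' : state -> Prop) :
  n <= n' -> (forall s, Q s -> Q' s) -> runs_within P n st Q -> runs_within P n' st Q'.
Proof. intros Hn HQ (t&s&Ht&Hr&Hq). exists t, s. repeat split; auto; lia. Qed.

Lemma upd_other M a v x : x <> a -> upd M a v x = M x.
Proof. intros. unfold upd. destruct (Nat.eqb_spec x a); congruence. Qed.

Lemma upd_same M a v x : x = a -> upd M a v x = v.
Proof. intros. unfold upd. destruct (Nat.eqb_spec x a); congruence. Qed.

Ltac upd_simp := repeat match goal with |- context [upd ?M ?a ?v ?x] =>
  first [rewrite (upd_other M a v x) by lia | rewrite (upd_same M a v x) by lia] end.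

Lemma step_const P pc mem d k : nth_error P pc = Some (IConst d k) ->
  step P (pc, mem) = Some (S pc, upd mem d k).
Proof. intros H; unfold step; rewrite H; auto. Qed.

Lemma step_add P pc mem d a b : nth_error P pc = Some (IAdd d a b) ->
  step P (pc, mem) = Some (S pc, upd mem d (mem a + mem b)).
Proof. intros H; unfold step; rewrite H; auto. Qed.

Lemma step_sub P pc mem d a b : nth_error P pc = Some (ISub d a b) ->
  step P (pc, mem) = Some (S pc, upd mem d (mem a - mem b)).
Proof. intros H; unfold step; rewrite H; auto. Qed.

Lemma step_load P pc mem d a : nth_error P pc = Some (ILoad d a) ->
  step P (pc, mem) = Some (S pc, upd mem d (mem (mem a))).
Proof. intros H; unfold step; rewrite H; auto. Qed.

Lemma step_store P pc mem a b : nth_error P pc = Some (IStore a b) ->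
  step P (pc, mem) = Some (S pc, upd mem (mem a) (mem b)).
Proof. intros H; unfold step; rewrite H; auto. Qed.

Lemma step_jz_zero P pc mem a l : nth_error P pc = Some (IJz a l) -> mem a = 0 ->
  step P (pc, mem) = Some (l, mem).
Proof. intros H H0; unfold step; rewrite H, H0; auto. Qed.

Lemma step_jz_nonzero P pc mem a l : nth_error P pc = Some (IJz a l) -> mem a <> 0 ->
  step P (pc, mem) = Some (S pc, mem).
Proof. intros H H0; unfold step; rewrite H. apply Nat.eqb_neq in H0. rewrite H0. auto. Qed.

Lemma step_jmp P pc mem l : nth_error P pc = Some (IJmp l) ->
  step P (pc, mem) = Some (l, mem).
Proof. intros H; unfold step; rewrite H; auto. Qed.

Lemma within_mul7 P pc d s n mem Q :
  nth_error P pc = Some (IAdd d s s) -> nth_error P (S pc) = Some (IAdd d d d) ->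
  nth_error P (S (S pc)) = Some (IAdd d d d) -> nth_error P (S (S (S pc))) = Some (ISub d d s) -> d <> s ->
  runs_within P n (S (S (S (S pc))), upd mem d (7 * mem s)) Q -> runs_within P (S (S (S (S n)))) (pc, mem) Q.
Proof.
  intros H1 H2 H3 H4 Hds Hw.
  eapply within_step. { apply step_add; eauto. }
  eapply within_step. { apply step_add; eauto. }
  eapply within_step. { apply step_add; eauto. }
  eapply within_step. { apply step_sub; eauto. }
  match goal with |- runs_within _ _ (_, ?m') _ => replace m' with (upd mem d (7*mem s)); auto end.
  apply functional_extensionality; intros x. unfold upd.
  repeat rewrite Nat.eqb_refl. destruct (Nat.eqb_spec s d); [congruence|].
  destruct (Nat.eqb_spec x d); lia.
Qed.

Lemma within_loop P (I : nat -> memory -> Prop) h m c e (Qx : state -> Prop) :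
  (forall k mem, k < m -> I k mem -> runs_within P c (h, mem) (fun s => fst s = h /\ I (S k) (snd s))) ->
  (forall mem, I m mem -> runs_within P e (h, mem) Qx) ->
  forall k mem, k <= m -> I k mem -> runs_within P (c * (m - k) + e) (h, mem) Qx.
Proof.
  intros Hb He. intros k. remember (m - k) as d. revert k Heqd.
  induction d; intros k Hd mem Hk HI.
  - assert (k = m) by lia. subst. replace (c * 0 + e) with e by lia. auto.
  - replace (c * S d + e) with (c + (c * d + e)) by lia.
    apply within_seq. eapply (within_mono _ c c); [lia| |apply (Hb k mem); [lia|exact HI]].
    intros [pc mem'] [Hpc HI']. simpl in Hpc, HI'. subst pc.
    apply (IHd (S k)); auto; lia.
Qed.

Ltac use_regs := repeat match goal with H : ?M ?c = _ |- context [?M ?c] => is_var M; rewrite H end.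
Ltac exec := eapply within_step; [first [ eapply step_const; reflexivity | eapply step_add; reflexivity | eapply step_sub; reflexivity | eapply step_load; reflexivity | eapply step_store; reflexivity | eapply step_jmp; reflexivity] |]; upd_simp; use_regs.
Ltac exec_jz_taken := eapply within_step; [eapply step_jz_zero; [reflexivity| upd_simp; try lia] |]; upd_simp.
Ltac exec_jz_skip := eapply within_step; [eapply step_jz_nonzero; [reflexivity| upd_simp; try lia] |]; upd_simp.
Ltac exec_mul7 := eapply within_mul7; [reflexivity|reflexivity|reflexivity|reflexivity|lia|]; upd_simp.

(* Cells 0, 1, 2 hold m, 7m and the loop index; cells 3 to 7 are scratch.
   Row r of Phibar(B_v), Phibar(B_w) and of the output starts at 8 + 7r,
   8 + 7m + 7r and 8 + 14m + 7r.  The list cells 4, 5, 6 of row r of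
   Phibar(B_v) are overwritten with prev_connector (r + 1), next_connector r
   and top_from 0 m r.  Loop A (pc 6) clears the output list heads and fills
   cell 4; loop B (pc 43) runs downwards and fills cells 5 and 6; loop C
   (pc 80) writes the output flags; loop D (pc 113) writes sigma_A and sigma_Z
   of row i and pushes i onto the corresponding output lists.  The numbers
   below are program counters, the targets of the jumps. *)

Definition Prog : list instr := [
(* 0 *) IAdd 1 0 0; IAdd 1 1 1; IAdd 1 1 1; ISub 1 1 0; IConst 2 0; IConst 3 0;
(* 6 *) ISub 4 0 2; IJz 4 40;
(* 8 *) IAdd 4 2 2; IAdd 4 4 4; IAdd 4 4 4; ISub 4 4 2; IConst 5 8; IAdd 4 4 5;
(* 14 *) IConst 6 0; IConst 5 6; IAdd 5 4 5; IStore 5 6;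
(* 18 *) IAdd 5 4 1; IAdd 5 5 1; IConst 7 3; IAdd 5 5 7; IStore 5 6; IConst 7 1; IAdd 5 5 7; IStore 5 6;
(* 26 *) IConst 5 2; IAdd 5 4 5; ILoad 5 5; IJz 5 34; IAdd 5 4 1; ILoad 5 5; IJz 5 34; IAdd 3 4 6;
(* 34 *) IConst 5 4; IAdd 5 4 5; IStore 5 3; IConst 7 1; IAdd 2 2 7; IJmp 6;
(* 40 *) IConst 7 0; IAdd 2 0 7; IConst 3 0;
(* 43 *) IJz 2 78; IConst 7 1; ISub 2 2 7;
(* 46 *) IAdd 4 2 2; IAdd 4 4 4; IAdd 4 4 4; ISub 4 4 2; IConst 5 8; IAdd 4 4 5;
(* 52 *) IConst 5 2; IAdd 5 4 5; ILoad 5 5; IJz 5 74; IAdd 5 4 1; ILoad 6 5; IJz 6 74;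
(* 59 *) IConst 7 0; IAdd 3 4 7; IConst 7 1; IAdd 5 5 7; ILoad 5 5;
(* 64 *) IAdd 7 6 6; IAdd 7 7 7; IAdd 7 7 7; ISub 7 7 6; IConst 6 7; IAdd 7 7 6;
(* 70 *) ILoad 6 7; ISub 6 5 6; IJz 6 74; IStore 7 5;
(* 74 *) IConst 5 5; IAdd 5 4 5; IStore 5 3; IJmp 43;
(* 78 *) IConst 2 0; IConst 3 0;
(* 80 *) ISub 4 0 2; IJz 4 112;
(* 82 *) IAdd 4 2 2; IAdd 4 4 4; IAdd 4 4 4; ISub 4 4 2; IConst 5 8; IAdd 4 4 5;
(* 88 *) IConst 5 6; IAdd 5 4 5; ILoad 5 5; ISub 6 5 3; IJz 6 95; IConst 6 0; IAdd 3 5 6;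
(* 95 *) IConst 6 0; ISub 5 3 2; IJz 5 104; IAdd 5 4 1; IConst 7 2; IAdd 5 5 7; ILoad 5 5; IJz 5 104; IConst 6 1;
(* 104 *) IAdd 5 4 1; IAdd 5 5 1; IConst 7 2; IAdd 5 5 7; IStore 5 6; IConst 7 1; IAdd 2 2 7; IJmp 80;
(* 112 *) IConst 2 0;
(* 113 *) ISub 4 0 2; IJz 4 193;
(* 115 *) IAdd 4 2 2; IAdd 4 4 4; IAdd 4 4 4; ISub 4 4 2; IConst 5 8; IAdd 4 4 5;
(* 121 *) ILoad 5 4; IJz 5 152;
(* 123 *) IAdd 6 5 5; IAdd 6 6 6; IAdd 6 6 6; ISub 6 6 5; IConst 7 6; IAdd 6 6 7; ILoad 3 6; IJz 3 152;
(* 131 *) IConst 7 1; IAdd 5 4 7; ILoad 5 5;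
(* 134 *) IAdd 6 5 5; IAdd 6 6 6; IAdd 6 6 6; ISub 6 6 5; IAdd 6 6 7; ISub 7 3 6; IJz 7 142; IJmp 152;
(* 142 *) IAdd 3 3 1; ILoad 3 3; IConst 7 4; IAdd 6 6 7; ILoad 6 6; IAdd 6 6 1; IConst 7 1; IAdd 6 6 7; ILoad 6 6; IJmp 154;
(* 152 *) IConst 3 0; IConst 6 0;
(* 154 *) IAdd 4 4 1; IAdd 4 4 1; IStore 4 3; IConst 7 1; IAdd 5 4 7; IStore 5 6;
(* 160 *) IJz 3 190;
(* 161 *) IAdd 5 3 3; IAdd 5 5 5; IAdd 5 5 5; ISub 5 5 3; IAdd 5 5 1; IAdd 5 5 1; IConst 7 4; IAdd 5 5 7;
(* 169 *) IConst 7 5; IAdd 7 4 7; ILoad 3 5; IStore 7 3; IConst 7 1; IAdd 3 2 7; IStore 5 3;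
(* 176 *) IJz 6 190;
(* 177 *) IAdd 5 6 6; IAdd 5 5 5; IAdd 5 5 5; ISub 5 5 6; IAdd 5 5 1; IAdd 5 5 1; IConst 7 5; IAdd 5 5 7;
(* 185 *) IConst 7 6; IAdd 7 4 7; ILoad 6 5; IStore 7 6; IStore 5 3;
(* 190 *) IConst 7 1; IAdd 2 2 7; IJmp 113;
(* 193 *) IHalt ].

Definition Inputs (mem0 : memory) m (mem : memory) : Prop :=
  forall r o, r < m -> o < 3 -> mem (8 + 7 * r + o) = mem0 (8 + 7 * r + o) /\
     mem (8 + 7 * m + 7 * r + o) = mem0 (8 + 7 * m + 7 * r + o).

Definition InvA mem0 m k (mem : memory) : Prop :=
  mem 0 = m /\ mem 1 = 7 * m /\ mem 2 = k /\ mem 3 = prev_connector mem0 m k /\ Inputs mem0 m mem /\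
  (forall r, r < k -> mem (8 + 7 * r + 6) = 0 /\ mem (8 + 14 * m + 7 * r + 3) = 0 /\
      mem (8 + 14 * m + 7 * r + 4) = 0 /\ mem (8 + 7 * r + 4) = prev_connector mem0 m (S r)).

Ltac close_invA k Hpr HI HW := apply within_ret;
    split; [reflexivity|]; cbn [snd];
    unfold InvA; upd_simp; use_regs; split; [auto|]; split; [auto|]; split; [lia|]; split; [rewrite Hpr; lia|]; split;
    [ intros r o Hr Ho; upd_simp; apply HI; auto
    | intros r Hr; destruct (Nat.eq_dec r k) as [->|Hne];
      [ upd_simp; repeat split; auto; lia
      | upd_simp; apply HW; lia ]].

Lemma bodyA mem0 m k mem : k < m -> InvA mem0 m k mem ->
  runs_within Prog 40 (6, mem) (fun s => fst s = 6 /\ InvA mem0 m (S k) (snd s)).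
Proof.
  intros Hk (H0&H1&H2&H3&HI&HW).
  assert (EV2 : mem (7 * k + 8 + 2) = mem0 (8 + 7 * k + 2)).
  { replace (7 * k + 8 + 2) with (8 + 7 * k + 2) by lia. apply HI; lia. }
  assert (EW0 : mem (7 * k + 8 + 7 * m) = mem0 (8 + 7 * m + 7 * k)).
  { replace (7 * k + 8 + 7 * m) with (8 + 7 * m + 7 * k + 0) by lia. rewrite Nat.add_0_r.
    pose proof (proj2 (HI k 0 Hk ltac:(lia))) as E. rewrite Nat.add_0_r in E. exact E. }
  exec. exec_jz_skip. exec_mul7. rewrite ?H0, ?H1, ?H2, ?H3. do 17 exec.
  assert (Hpr : prev_connector mem0 m (S k) = if connectorb mem0 m k then 8 + 7 * k else prev_connector mem0 m k) by reflexivity.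
  unfold connectorb in Hpr.
  destruct (Nat.eq_dec (mem0 (8 + 7 * k + 2)) 0) as [E2|E2].
  - rewrite E2 in Hpr. cbn [Nat.eqb negb andb] in Hpr. exec_jz_taken. do 6 exec. close_invA k Hpr HI HW.
  - exec_jz_skip. do 2 exec.
    destruct (Nat.eq_dec (mem0 (8 + 7 * m + 7 * k)) 0) as [E3|E3].
    + rewrite E3 in Hpr. destruct (mem0 (8 + 7 * k + 2) =? 0); cbn [Nat.eqb negb andb] in Hpr;
      exec_jz_taken; do 6 exec; close_invA k Hpr HI HW.
    + replace (mem0 (8 + 7 * k + 2) =? 0) with false in Hpr by (symmetry; apply Nat.eqb_neq; auto).
      replace (mem0 (8 + 7 * m + 7 * k) =? 0) with false in Hpr by (symmetry; apply Nat.eqb_neq; auto).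
      cbn [Nat.eqb negb andb] in Hpr.
      exec_jz_skip. do 7 exec. close_invA k Hpr HI HW.
Qed.

Lemma exitA mem0 m mem : InvA mem0 m m mem ->
  runs_within Prog 2 (6, mem) (fun s => fst s = 40 /\ InvA mem0 m m (snd s)).
Proof.
  intros (H0&H1&H2&H3&HI&HW).
  exec. exec_jz_taken. apply within_ret. split; [reflexivity|]. cbn [snd].
  unfold InvA. upd_simp. use_regs. split; [auto|]. split; [auto|]. split; [lia|]. split; [auto|]. split.
  - intros r o Hr Ho. upd_simp. apply HI; auto.
  - intros r Hr. upd_simp. apply HW; auto.
Qed.

Lemma initA mem0 m : mem0 0 = m ->
  runs_within Prog 10 (0, mem0) (fun s => fst s = 6 /\ InvA mem0 m 0 (snd s)).
Proof.
  intros H0.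
  exec_mul7. do 2 exec. apply within_ret. split; [reflexivity|]. cbn [snd].
  unfold InvA. upd_simp. use_regs. split; [auto|]. split; [auto|]. split; [lia|]. split; [auto|]. split.
  - intros r o Hr Ho. upd_simp. auto.
  - intros r Hr. lia.
Qed.

Lemma phaseA mem0 m : mem0 0 = m ->
  runs_within Prog (10 + (40 * (m - 0) + 2)) (0, mem0) (fun s => fst s = 40 /\ InvA mem0 m m (snd s)).
Proof.
  intros H0. apply within_seq. eapply (within_mono _ 10 10); [lia| |apply (initA _ _ H0)].
  intros [pc mem] [Hpc HI]. simpl in Hpc, HI. subst pc.
  apply (within_loop Prog (InvA mem0 m) 6 m 40 2); auto.
  - intros k mem' Hk HI'. apply bodyA; auto.
  - intros. apply exitA; auto.
  - lia.
Qed.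

Definition InvB mem0 m d (mem : memory) : Prop :=
  mem 0 = m /\ mem 1 = 7 * m /\ mem 2 = m - d /\ mem 3 = next_connector mem0 m (m - d) d /\ Inputs mem0 m mem /\
  (forall r, r < m -> mem (8 + 14 * m + 7 * r + 3) = 0 /\
      mem (8 + 14 * m + 7 * r + 4) = 0 /\ mem (8 + 7 * r + 4) = prev_connector mem0 m (S r)) /\
  (forall r, m - d <= r < m -> mem (8 + 7 * r + 5) = next_connector mem0 m r (m - r)) /\
  (forall x, x < m -> mem (8 + 7 * x + 6) = top_from mem0 m (m - d) d x).

Lemma initB mem0 m mem : InvA mem0 m m mem ->
  runs_within Prog 3 (40, mem) (fun s => fst s = 43 /\ InvB mem0 m 0 (snd s)).
Proof.
  intros (H0&H1&H2&H3&HI&HW).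
  do 3 exec. apply within_ret. split; [reflexivity|]. cbn [snd].
  unfold InvB. upd_simp. use_regs. rewrite Nat.sub_0_r. split; [auto|]. split; [auto|]. split; [lia|]. split; [auto|]. split.
  - intros r o Hr Ho. upd_simp. apply HI; auto.
  - split; [|split].
    + intros r Hr. upd_simp. destruct (HW r Hr) as (?&?&?&?). auto.
    + intros r Hr. lia.
    + intros x Hx. upd_simp. destruct (HW x Hx) as (?&?&?&?). auto.
Qed.

Ltac close_invB k HnF HI HY HN := apply within_ret; split; [reflexivity|]; cbn [snd];
    unfold InvB; upd_simp; use_regs;
    match goal with E : ?m - S ?d = k |- _ => rewrite E end;
    split; [auto|]; split; [auto|]; split; [lia|]; split; [rewrite HnF; lia|]; split;
    [ intros r o Hr Ho; upd_simp; apply HI; auto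
    | split; [|split];
      [ intros r Hr; upd_simp; apply HY; auto
      | intros r Hr; destruct (Nat.eq_dec r k) as [->|Hne];
        [ upd_simp; match goal with E : ?m - S ?d = k |- _ => replace (m - k) with (S d) by lia end;
          rewrite HnF; lia
        | upd_simp; apply HN; lia ]
      | ]].

Lemma bodyB mem0 m d mem : WBound mem0 m -> d < m -> InvB mem0 m d mem ->
  runs_within Prog 40 (43, mem) (fun s => fst s = 43 /\ InvB mem0 m (S d) (snd s)).
Proof.
  intros HB Hd (H0&H1&H2&H3&HI&HY&HN&HZ).
  destruct (m - d) as [|k] eqn:Ek; [lia|].
  assert (Ek' : m - S d = k) by lia.
  assert (EV2 : mem (7 * k + 8 + 2) = mem0 (8 + 7 * k + 2)).
  { replace (7 * k + 8 + 2) with (8 + 7 * k + 2) by lia. apply HI; lia. }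
  assert (EW0 : mem (7 * k + 8 + 7 * m) = mem0 (8 + 7 * m + 7 * k)).
  { replace (7 * k + 8 + 7 * m) with (8 + 7 * m + 7 * k + 0) by lia. rewrite Nat.add_0_r.
    pose proof (proj2 (HI k 0 ltac:(lia) ltac:(lia))) as E. rewrite Nat.add_0_r in E. exact E. }
  assert (EW1 : mem (7 * k + 8 + 7 * m + 1) = mem0 (8 + 7 * m + 7 * k + 1)).
  { replace (7 * k + 8 + 7 * m + 1) with (8 + 7 * m + 7 * k + 1) by lia. apply HI; lia. }
  assert (HnF : next_connector mem0 m k (S d) = if connectorb mem0 m k then 8 + 7 * k else next_connector mem0 m (S k) d) by reflexivity.
  assert (HzF : forall x, top_from mem0 m k (S d) x = Nat.max (top_from mem0 m (S k) d x)
      (if (connectorb mem0 m k && (mem0 (8 + 7 * m + 7 * k) =? S x))%bool then mem0 (8 + 7 * m + 7 * k + 1) else 0)) by reflexivity.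
  pose proof (HB k ltac:(lia)) as HBk.
  exec_jz_skip. do 2 exec. replace (S k - 1) with k by lia. exec_mul7. do 5 exec.
  destruct (Nat.eq_dec (mem0 (8 + 7 * k + 2)) 0) as [E2|E2].
  - assert (Hg : connectorb mem0 m k = false) by (unfold connectorb; rewrite E2; reflexivity).
    rewrite Hg in HnF, HzF.
    exec_jz_taken. do 4 exec. close_invB k HnF HI HY HN.
    intros x Hx. upd_simp. rewrite HzF, HZ by auto. cbn [andb]. lia.
  - exec_jz_skip. do 2 exec.
    destruct (mem0 (8 + 7 * m + 7 * k)) as [|x0] eqn:E3.
    + assert (Hg : connectorb mem0 m k = false) by (unfold connectorb; rewrite E3; apply andb_false_r).
      rewrite Hg in HnF, HzF.
      exec_jz_taken. do 4 exec. close_invB k HnF HI HY HN.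
      intros x Hx. upd_simp. rewrite HzF, HZ by auto. cbn [andb]. lia.
    + assert (Hg : connectorb mem0 m k = true) by (unfold connectorb; rewrite E3; apply andb_true_iff; split; apply negb_true_iff; apply Nat.eqb_neq; auto).
      rewrite Hg in HnF, HzF. cbn [andb] in HzF.
      assert (EZ0 : mem (7 * S x0 + 7) = top_from mem0 m (S k) d x0).
      { rewrite <- HZ by lia. f_equal. lia. }
      exec_jz_skip. do 5 exec. exec_mul7. do 4 exec.
      destruct (Nat.eq_dec (mem0 (8 + 7 * m + 7 * k + 1) - top_from mem0 m (S k) d x0) 0) as [E4|E4].
      * exec_jz_taken. do 4 exec. close_invB k HnF HI HY HN.
        intros x Hx. upd_simp. rewrite HzF, HZ by auto.
        destruct (Nat.eqb_spec (S x0) (S x)) as [Ex|Ex]; [assert (x = x0) by lia; subst x; lia|lia].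
      * exec_jz_skip. do 5 exec. close_invB k HnF HI HY HN.
        intros x Hx. destruct (Nat.eq_dec x x0) as [->|Hne].
        -- upd_simp. rewrite HzF, Nat.eqb_refl. lia.
        -- upd_simp. rewrite HzF, HZ by auto. destruct (Nat.eqb_spec (S x0) (S x)) as [Ex|Ex]; [lia|lia].
Qed.

Lemma exitB mem0 m mem : InvB mem0 m m mem ->
  runs_within Prog 1 (43, mem) (fun s => fst s = 78 /\ InvB mem0 m m (snd s)).
Proof.
  intros HI. pose proof HI as (H0&H1&H2&_). rewrite Nat.sub_diag in H2.
  exec_jz_taken. apply within_ret. split; auto.
Qed.

Lemma phaseB mem0 m mem : WBound mem0 m -> InvA mem0 m m mem ->
  runs_within Prog (3 + (40 * (m - 0) + 1)) (40, mem) (fun s => fst s = 78 /\ InvB mem0 m m (snd s)).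
Proof.
  intros HB HA. apply within_seq. eapply (within_mono _ 3 3); [lia| |apply (initB _ _ _ HA)].
  intros [pc mem'] [Hpc HI]. simpl in Hpc, HI. subst pc.
  apply (within_loop Prog (InvB mem0 m) 43 m 40 1); auto.
  - intros k mem'' Hk HI'. apply bodyB; auto.
  - intros. apply exitB; auto.
  - lia.
Qed.

Definition InvC mem0 m j (mem : memory) : Prop :=
  mem 0 = m /\ mem 1 = 7 * m /\ mem 2 = j /\ mem 3 = top_upto mem0 m j /\ Inputs mem0 m mem /\
  (forall r, r < m -> mem (8 + 14 * m + 7 * r + 3) = 0 /\
      mem (8 + 14 * m + 7 * r + 4) = 0 /\ mem (8 + 7 * r + 4) = prev_connector mem0 m (S r)) /\
  (forall r, r < m -> mem (8 + 7 * r + 5) = next_connector mem0 m r (m - r)) /\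
  (forall x, x < m -> mem (8 + 7 * x + 6) = top_from mem0 m 0 m x) /\
  (forall r, r < j -> mem (8 + 14 * m + 7 * r + 2) = flag_out mem0 m r).

Lemma initC mem0 m mem : InvB mem0 m m mem ->
  runs_within Prog 2 (78, mem) (fun s => fst s = 80 /\ InvC mem0 m 0 (snd s)).
Proof.
  intros (H0&H1&H2&H3&HI&HY&HN&HZ). rewrite Nat.sub_diag in *.
  do 2 exec. apply within_ret. split; [reflexivity|]. cbn [snd].
  unfold InvC. upd_simp. use_regs. split; [auto|]. split; [auto|]. split; [lia|]. split; [auto|]. split.
  - intros r o Hr Ho. upd_simp. apply HI; auto.
  - split; [|split; [|split]].
    + intros r Hr. upd_simp. apply HY; auto.
    + intros r Hr. upd_simp. apply HN; lia.
    + intros x Hx. upd_simp. apply HZ; auto.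
    + intros; lia.
Qed.

Ltac close_invC j Hfl HI HY HN HZ HF := apply within_ret; split; [reflexivity|]; cbn [snd];
    unfold InvC; upd_simp; use_regs;
    split; [auto|]; split; [auto|]; split; [lia|]; split; [simpl top_upto; lia|]; split;
    [ intros r o Hr Ho; upd_simp; apply HI; auto
    | split; [|split; [|split]];
      [ intros r Hr; upd_simp; apply HY; auto
      | intros r Hr; upd_simp; apply HN; auto
      | intros x Hx; upd_simp; apply HZ; auto
      | intros r Hr; destruct (Nat.eq_dec r j) as [->|Hne];
        [ upd_simp; rewrite Hfl; reflexivity
        | upd_simp; apply HF; lia ] ] ].

Lemma bodyC mem0 m j mem : j < m -> InvC mem0 m j mem ->
  runs_within Prog 40 (80, mem) (fun s => fst s = 80 /\ InvC mem0 m (S j) (snd s)).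
Proof.
  intros Hj (H0&H1&H2&H3&HI&HY&HN&HZ&HF).
  assert (EZ : mem (7 * j + 8 + 6) = top_from mem0 m 0 m j).
  { rewrite <- HZ by auto. f_equal. lia. }
  assert (EW2 : mem (7 * j + 8 + 7 * m + 2) = mem0 (8 + 7 * m + 7 * j + 2)).
  { replace (7 * j + 8 + 7 * m + 2) with (8 + 7 * m + 7 * j + 2) by lia. apply HI; lia. }
  assert (Hrc : top_upto mem0 m (S j) = Nat.max (top_upto mem0 m j) (top_from mem0 m 0 m j)) by reflexivity.
  exec. exec_jz_skip. exec_mul7. do 6 exec.
  destruct (Nat.eq_dec (top_from mem0 m 0 m j - top_upto mem0 m j) 0) as [E1|E1].
  - assert (Hr' : top_upto mem0 m (S j) = top_upto mem0 m j) by (rewrite Hrc; lia).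
    exec_jz_taken. do 2 exec.
    destruct (Nat.eq_dec (top_upto mem0 m j - j) 0) as [E2|E2].
    + assert (Hfl : flag_out mem0 m j = 0) by (unfold flag_out; rewrite Hr', E2; reflexivity).
      exec_jz_taken. do 8 exec. close_invC j Hfl HI HY HN HZ HF.
    + exec_jz_skip. do 4 exec.
      destruct (Nat.eq_dec (mem0 (8 + 7 * m + 7 * j + 2)) 0) as [E3|E3].
      * assert (Hfl : flag_out mem0 m j = 0) by (unfold flag_out; rewrite E3; destruct (_ =? 0); reflexivity).
        exec_jz_taken. do 8 exec. close_invC j Hfl HI HY HN HZ HF.
      * assert (Hfl : flag_out mem0 m j = 1).
        { unfold flag_out. rewrite Hr'. replace (top_upto mem0 m j - j =? 0) with false by (symmetry; apply Nat.eqb_neq; auto).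
          replace (mem0 (8 + 7 * m + 7 * j + 2) =? 0) with false by (symmetry; apply Nat.eqb_neq; auto). reflexivity. }
        exec_jz_skip. do 9 exec. close_invC j Hfl HI HY HN HZ HF.
  - assert (Hr' : top_upto mem0 m (S j) = top_from mem0 m 0 m j) by (rewrite Hrc; lia).
    exec_jz_skip. do 4 exec.
    destruct (Nat.eq_dec (top_from mem0 m 0 m j - j) 0) as [E2|E2].
    + assert (Hfl : flag_out mem0 m j = 0) by (unfold flag_out; rewrite Hr', E2; reflexivity).
      exec_jz_taken. do 8 exec. close_invC j Hfl HI HY HN HZ HF.
    + exec_jz_skip. do 4 exec.
      destruct (Nat.eq_dec (mem0 (8 + 7 * m + 7 * j + 2)) 0) as [E3|E3].
      * assert (Hfl : flag_out mem0 m j = 0) by (unfold flag_out; rewrite E3; destruct (_ =? 0); reflexivity).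
        exec_jz_taken. do 8 exec. close_invC j Hfl HI HY HN HZ HF.
      * assert (Hfl : flag_out mem0 m j = 1).
        { unfold flag_out. rewrite Hr'. replace (top_from mem0 m 0 m j - j =? 0) with false by (symmetry; apply Nat.eqb_neq; auto).
          replace (mem0 (8 + 7 * m + 7 * j + 2) =? 0) with false by (symmetry; apply Nat.eqb_neq; auto). reflexivity. }
        exec_jz_skip. do 9 exec. close_invC j Hfl HI HY HN HZ HF.
Qed.

Lemma exitC mem0 m mem : InvC mem0 m m mem ->
  runs_within Prog 2 (80, mem) (fun s => fst s = 112 /\ InvC mem0 m m (snd s)).
Proof.
  intros (H0&H1&H2&H3&HI&HY&HN&HZ&HF).
  exec. exec_jz_taken. apply within_ret. split; [reflexivity|]. cbn [snd].
  unfold InvC. upd_simp. use_regs. split; [auto|]. split; [auto|]. split; [lia|]. split; [auto|]. split.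
  - intros r o Hr Ho. upd_simp. apply HI; auto.
  - split; [|split; [|split]].
    + intros r Hr. upd_simp. apply HY; auto.
    + intros r Hr. upd_simp. apply HN; lia.
    + intros x Hx. upd_simp. apply HZ; auto.
    + intros r Hr. upd_simp. apply HF; auto.
Qed.

Lemma phaseC mem0 m mem : InvB mem0 m m mem ->
  runs_within Prog (2 + (40 * (m - 0) + 2)) (78, mem) (fun s => fst s = 112 /\ InvC mem0 m m (snd s)).
Proof.
  intros HA. apply within_seq. eapply (within_mono _ 2 2); [lia| |apply (initC _ _ _ HA)].
  intros [pc mem'] [Hpc HI]. simpl in Hpc, HI. subst pc.
  apply (within_loop Prog (InvC mem0 m) 80 m 40 2); auto.
  - intros k mem'' Hk HI'. apply bodyC; auto.
  - intros. apply exitC; auto.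
  - lia.
Qed.

Definition InvD mem0 m i (mem : memory) : Prop :=
  mem 0 = m /\ mem 1 = 7 * m /\ mem 2 = i /\ Inputs mem0 m mem /\
  (forall r, r < m -> mem (8 + 7 * r + 4) = prev_connector mem0 m (S r) /\
      mem (8 + 7 * r + 5) = next_connector mem0 m r (m - r) /\ mem (8 + 14 * m + 7 * r + 2) = flag_out mem0 m r) /\
  (forall r, r < i -> mem (8 + 14 * m + 7 * r) = sigmaA_out mem0 m r /\ mem (8 + 14 * m + 7 * r + 1) = sigmaZ_out mem0 m r) /\
  (forall j, j < m -> LList mem m (8 + 14 * m) 5 (mem (8 + 14 * m + 7 * j + 3)) (preimage_list (sigmaA_out mem0 m) i j) /\
                      LList mem m (8 + 14 * m) 6 (mem (8 + 14 * m + 7 * j + 4)) (preimage_list (sigmaZ_out mem0 m) i j)).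

Lemma initD mem0 m mem : InvC mem0 m m mem ->
  runs_within Prog 1 (112, mem) (fun s => fst s = 113 /\ InvD mem0 m 0 (snd s)).
Proof.
  intros (H0&H1&H2&H3&HI&HY&HN&HZ&HF).
  exec. apply within_ret. split; [reflexivity|]. cbn [snd].
  unfold InvD. upd_simp. use_regs. split; [auto|]. split; [auto|]. split; [lia|]. split; [|split; [|split]].
  - intros r o Hr Ho. upd_simp. apply HI; auto.
  - intros r Hr. upd_simp. split; [apply HY; auto|]. split; [apply HN; auto|apply HF; auto].
  - intros; lia.
  - intros j Hj. upd_simp. destruct (HY j Hj) as (E3&E4&_). rewrite E3, E4. split; constructor.
Qed.

Definition MidD mem0 m i (mem : memory) (s : state) : Prop :=
  fst s = 154 /\ snd s 0 = m /\ snd s 1 = 7 * m /\ snd s 2 = i /\ snd s 3 = sigmaA_out mem0 m i /\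
  snd s 4 = 7 * i + 8 /\ snd s 6 = sigmaZ_out mem0 m i /\ forall x, 8 <= x -> snd s x = mem x.

Ltac close_midD := apply within_ret; unfold MidD; cbn [fst snd]; upd_simp; use_regs;
  split; [reflexivity|]; split; [auto|]; split; [auto|]; split; [auto|];
  split; [auto|]; split; [lia|]; split; [auto|]; intros x Hx; upd_simp; reflexivity.

Lemma bodyD_lookup mem0 m i mem : VBound mem0 m -> i < m -> InvD mem0 m i mem ->
  runs_within Prog 50 (113, mem) (MidD mem0 m i mem).
Proof.
  intros HVB Hi (H0&H1&H2&HI&HA&HO&HL).
  destruct (HVB i Hi) as [HB0 HB1].
  assert (EV0 : mem (7 * i + 8) = mem0 (8 + 7 * i)).
  { replace (7 * i + 8) with (8 + 7 * i + 0) by lia. rewrite Nat.add_0_r.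
    pose proof (proj1 (HI i 0 Hi ltac:(lia))) as E. rewrite Nat.add_0_r in E. exact E. }
  assert (EV1 : mem (7 * i + 8 + 1) = mem0 (8 + 7 * i + 1)).
  { replace (7 * i + 8 + 1) with (8 + 7 * i + 1) by lia. apply HI; lia. }
  exec. exec_jz_skip. exec_mul7. do 3 exec.
  destruct (mem0 (8 + 7 * i)) as [|a] eqn:Ea.
  - assert (HoA : sigmaA_out mem0 m i = 0) by (unfold sigmaA_out; rewrite Ea; auto).
    assert (HoZ : sigmaZ_out mem0 m i = 0) by (unfold sigmaZ_out; rewrite Ea; auto).
    exec_jz_taken. do 2 exec. close_midD.
  - assert (ENa : mem (7 * S a + 6) = next_connector mem0 m a (m - a)).
    { rewrite <- (proj1 (proj2 (HA a ltac:(lia)))). f_equal. lia. }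
    exec_jz_skip. exec_mul7. do 3 exec.
    destruct (next_connector_spec mem0 m (m - a) a) as [[EN _]|[k1 (Hk1&Gk1&EN&Hmin)]].
    + assert (HoA : sigmaA_out mem0 m i = 0) by (unfold sigmaA_out; rewrite Ea; cbn zeta; rewrite EN; auto).
      assert (HoZ : sigmaZ_out mem0 m i = 0) by (unfold sigmaZ_out; rewrite Ea; cbn zeta; rewrite EN; auto).
      exec_jz_taken. do 2 exec. close_midD.
    + exec_jz_skip. do 3 exec. exec_mul7. do 2 exec.
      destruct (Nat.eq_dec (8 + 7 * k1 - (7 * mem0 (8 + 7 * i + 1) + 1)) 0) as [Ec|Ec].
      * set (b1 := mem0 (8 + 7 * i + 1)) in *.
        assert (Hb1 : k1 < b1) by lia.
        destruct (prev_connector_spec mem0 m b1) as [[EP HP]|[kz (Hkz&Gkz&EP&Hmax)]].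
        { rewrite HP in Gk1; [discriminate|lia]. }
        assert (EW0 : mem (8 + 7 * k1 + 7 * m) = mem0 (8 + 7 * k1 + 7 * m)).
        { replace (8 + 7 * k1 + 7 * m) with (8 + 7 * m + 7 * k1 + 0) by lia. rewrite Nat.add_0_r.
          pose proof (proj2 (HI k1 0 ltac:(lia) ltac:(lia))) as E. rewrite Nat.add_0_r in E. exact E. }
        assert (EP4 : mem (7 * b1 + 1 + 4) = prev_connector mem0 m b1).
        { destruct b1 as [|b]; [lia|]. rewrite <- (proj1 (HA b ltac:(lia))). f_equal. lia. }
        assert (EW1 : mem (8 + 7 * kz + 7 * m + 1) = mem0 (8 + 7 * kz + 7 * m + 1)).
        { replace (8 + 7 * kz + 7 * m + 1) with (8 + 7 * m + 7 * kz + 1) by lia. rewrite (proj2 (HI kz 1 ltac:(lia) ltac:(lia))). reflexivity. }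
        assert (HoA : sigmaA_out mem0 m i = mem0 (8 + 7 * k1 + 7 * m)).
        { unfold sigmaA_out; rewrite Ea; cbn zeta; rewrite EN. fold b1. rewrite Ec. reflexivity. }
        assert (HoZ : sigmaZ_out mem0 m i = mem0 (8 + 7 * kz + 7 * m + 1)).
        { unfold sigmaZ_out; rewrite Ea; cbn zeta; rewrite EN. fold b1. rewrite Ec, EP. reflexivity. }
        rewrite EN in ENa. rewrite EP in EP4.
        exec_jz_taken. rewrite ?EN. use_regs. do 5 exec. rewrite ?EP. use_regs. do 5 exec. rewrite ?EN, ?EP. close_midD.
      * assert (HoA : sigmaA_out mem0 m i = 0).
        { unfold sigmaA_out; rewrite Ea; cbn zeta; rewrite EN. destruct (Nat.eqb_spec (8 + 7 * k1) 0); [lia|].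
          destruct (Nat.eqb_spec (8 + 7 * k1 - (7 * mem0 (8 + 7 * i + 1) + 1)) 0); [lia|]. auto. }
        assert (HoZ : sigmaZ_out mem0 m i = 0).
        { unfold sigmaZ_out; rewrite Ea; cbn zeta; rewrite EN. destruct (Nat.eqb_spec (8 + 7 * k1) 0); [lia|].
          destruct (Nat.eqb_spec (8 + 7 * k1 - (7 * mem0 (8 + 7 * i + 1) + 1)) 0); [lia|]. auto. }
        exec_jz_skip. do 3 exec. close_midD.
Qed.

Ltac frame_rw HfrS := repeat match goal with |- context [?M ?x] => is_var M; rewrite (HfrS x) by lia end.

Ltac close_invD i HfrS HI HA HO EA EZ :=
    unfold InvD; upd_simp; use_regs; frame_rw HfrS; split; [auto|]; split; [auto|]; split; [lia|]; split; [|split; [|split]];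
    [ intros r o Hr Ho; upd_simp; frame_rw HfrS; apply HI; auto
    | intros r Hr; upd_simp; frame_rw HfrS; apply HA; auto
    | intros r Hr; destruct (Nat.eq_dec r i) as [->|Hne];
      [ upd_simp; rewrite EA, EZ; auto
      | upd_simp; frame_rw HfrS; apply HO; lia ]
    | ].

Ltac keep_list HfrS EZ L2 := rewrite preimage_list_S, EZ; cbn [Nat.eqb]; upd_simp; frame_rw HfrS;
   (eapply LList_frame; [exact L2|intros r; apply preimage_list_lt|]);
   intros r Hr; upd_simp; frame_rw HfrS; reflexivity.

Ltac push_list i m o ja j HfrS EA L1 := destruct (Nat.eq_dec j ja) as [->|Hne];
   [ rewrite preimage_list_S, EA, Nat.eqb_refl; upd_simp; frame_rw HfrS; replace (i + 1) with (S i) by lia;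
     constructor; [lia|]; upd_simp; frame_rw HfrS;
     match goal with |- LList _ _ _ _ (?M ?X) _ => is_var M; replace X with (8 + 14 * m + 7 * ja + o) by lia end;
     (eapply LList_frame; [exact L1|intros r; apply preimage_list_lt|]);
     intros r Hr; upd_simp; frame_rw HfrS; reflexivity
   | rewrite preimage_list_S, EA; replace (S ja =? S j) with false by (symmetry; apply Nat.eqb_neq; lia);
     upd_simp; frame_rw HfrS;
     (eapply LList_frame; [exact L1|intros r; apply preimage_list_lt|]);
     intros r Hr; upd_simp; frame_rw HfrS; reflexivity ].

Lemma bodyD_emit mem0 m i mem st : i < m -> sigmaA_out mem0 m i <= m -> sigmaZ_out mem0 m i <= m ->
  InvD mem0 m i mem -> MidD mem0 m i mem st ->
  runs_within Prog 40 st (fun s => fst s = 113 /\ InvD mem0 m (S i) (snd s)).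
Proof.
  intros Hi HbA HbZ (H0&H1&H2&HI&HA&HO&HL) (Hpc&R0&R1&R2&R3&R4&R6&Hfr).
  destruct st as [pc mem1]. cbn [fst snd] in *. subst pc.
  assert (HfrS : forall x, 8 <= x -> mem1 x = mem x) by exact Hfr. clear Hfr.
  do 6 exec.
  destruct (sigmaA_out mem0 m i) as [|ja] eqn:EA.
  - pose proof (sigmaA_out_zero _ _ _ EA) as EZ. rewrite EZ in *.
    exec_jz_taken. do 3 exec. apply within_ret. split; [reflexivity|]. cbn [snd].
    unfold InvD. upd_simp. use_regs. frame_rw HfrS. split; [auto|]. split; [auto|]. split; [lia|]. split; [|split; [|split]].
    + intros r o Hr Ho. upd_simp. frame_rw HfrS. apply HI; auto.
    + intros r Hr. upd_simp. frame_rw HfrS. apply HA; auto.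
    + intros r Hr. destruct (Nat.eq_dec r i) as [->|Hne].
      * upd_simp. rewrite EA, EZ. auto.
      * upd_simp. frame_rw HfrS. apply HO; lia.
    + intros j Hj. rewrite !preimage_list_S, EA, EZ. cbn [Nat.eqb]. upd_simp. frame_rw HfrS.
      destruct (HL j Hj) as [L1 L2]. split; (eapply LList_frame; [eassumption|intros r; apply preimage_list_lt|]);
      intros r Hr; upd_simp; frame_rw HfrS; reflexivity.
  - exec_jz_skip. exec_mul7. do 11 exec.
    destruct (sigmaZ_out mem0 m i) as [|jz] eqn:EZ.
    + exec_jz_taken. do 3 exec. apply within_ret. split; [reflexivity|]. cbn [snd].
      close_invD i HfrS HI HA HO EA EZ. intros j Hj. destruct (HL j Hj) as [L1 L2]. split.
      * push_list i m 3 ja j HfrS EA L1.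
      * keep_list HfrS EZ L2.
    + exec_jz_skip. exec_mul7. do 12 exec. apply within_ret. split; [reflexivity|]. cbn [snd].
      close_invD i HfrS HI HA HO EA EZ. intros j Hj. destruct (HL j Hj) as [L1 L2]. split.
      * push_list i m 3 ja j HfrS EA L1.
      * push_list i m 4 jz j HfrS EZ L2.
Qed.

Lemma bodyD mem0 m i mem : VBound mem0 m -> WBound mem0 m -> W1Bound mem0 m -> i < m -> InvD mem0 m i mem ->
  runs_within Prog (50 + 40) (113, mem) (fun s => fst s = 113 /\ InvD mem0 m (S i) (snd s)).
Proof.
  intros HV HW HW1 Hi HD. apply within_seq. apply (within_mono _ 50 50 _ (MidD mem0 m i mem)); [lia| |apply bodyD_lookup; auto].
  intros st Hst. apply (bodyD_emit mem0 m i mem); auto.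
  - apply sigmaA_out_le; auto.
  - apply sigmaZ_out_le; auto.
Qed.

Lemma exitD mem0 m mem : InvD mem0 m m mem ->
  runs_within Prog 2 (113, mem) (fun s => fst s = 193 /\ InvD mem0 m m (snd s)).
Proof.
  intros (H0&H1&H2&HI&HA&HO&HL).
  exec. exec_jz_taken. apply within_ret. split; [reflexivity|]. cbn [snd].
  unfold InvD. upd_simp. use_regs. split; [auto|]. split; [auto|]. split; [lia|]. split; [|split; [|split]].
  - intros r o Hr Ho. upd_simp. apply HI; auto.
  - intros r Hr. upd_simp. apply HA; auto.
  - intros r Hr. upd_simp. apply HO; auto.
  - intros j Hj. upd_simp. destruct (HL j Hj) as [L1 L2].
    split; (eapply LList_frame; [eassumption|intros r; apply preimage_list_lt|]); intros r Hr; upd_simp; reflexivity.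
Qed.

Lemma phaseD mem0 m mem : VBound mem0 m -> WBound mem0 m -> W1Bound mem0 m -> InvC mem0 m m mem ->
  runs_within Prog (1 + ((50 + 40) * (m - 0) + 2)) (112, mem) (fun s => fst s = 193 /\ InvD mem0 m m (snd s)).
Proof.
  intros HV HW HW1 HC. apply within_seq. eapply (within_mono _ 1 1); [lia| |apply (initD _ _ _ HC)].
  intros [pc mem'] [Hpc HI]. simpl in Hpc, HI. subst pc.
  apply (within_loop Prog (InvD mem0 m) 113 m (50 + 40) 2); auto.
  - intros k mem'' Hk HI'. apply bodyD; auto.
  - intros. apply exitD; auto.
  - lia.
Qed.

Lemma Prog_runs mem0 m : mem0 0 = m -> VBound mem0 m -> WBound mem0 m -> W1Bound mem0 m ->
  exists t mem', t <= 300 * (m + 1) /\ halts_in Prog mem0 t mem' /\ OutputOK mem0 m mem'.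
Proof.
  intros H0 HV HW HW1.
  assert (Hw : runs_within Prog ((10 + (40 * (m - 0) + 2)) + ((3 + (40 * (m - 0) + 1)) + ((2 + (40 * (m - 0) + 2)) +
                (1 + ((50 + 40) * (m - 0) + 2))))) (0, mem0) (fun s => fst s = 193 /\ InvD mem0 m m (snd s))).
  { apply within_seq. eapply within_mono; [reflexivity| |apply (phaseA _ _ H0)].
    intros [pc mem1] [Hpc HA]. simpl in Hpc, HA. subst pc.
    apply within_seq. eapply within_mono; [reflexivity| |apply (phaseB _ _ _ HW HA)].
    intros [pc mem2] [Hpc HB]. simpl in Hpc, HB. subst pc.
    apply within_seq. eapply within_mono; [reflexivity| |apply (phaseC _ _ _ HB)].
    intros [pc mem3] [Hpc HC]. simpl in Hpc, HC. subst pc.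
    apply phaseD; auto. }
  destruct Hw as (t&[pc mem']&Ht&Hrun&Hpc&HD). simpl in Hpc, HD. subst pc.
  exists t, mem'. split; [lia|]. split; [exists 193; split; auto|].
  destruct HD as (_&_&_&_&HA&HO&HL). intros r Hr.
  destruct (HA r Hr) as (_&_&EF). destruct (HO r Hr) as [EA EZ]. destruct (HL r Hr) as [LA LZ].
  repeat split; auto.
Qed.

Theorem lemma5 :
  exists (P : list instr) (c : nat),
    forall (m n : nat) (M : nat -> nat -> bool) (s1 s2 s3 : nat),
      s1 <= s2 -> s2 <= s3 -> s3 < n ->
      forall mem0 : memory,
        mem0 0 = m ->
        EncPhi mem0 8 M m n s1 s2 ->
        EncPhi mem0 (8 + 7 * m) M m n s2 s3 ->
        exists t mem',
          t <= c * (m + 1) /\ halts_in P mem0 t mem' /\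
          EncPhi mem' (8 + 14 * m) M m n s1 s3.
Proof.
  exists Prog, 300. intros m n M s1 s2 s3 H12 H23 _ mem0 Hm HV HW.
  assert (HVB : VBound mem0 m) by (intros r Hr; exact (EncPhi_entry_le _ _ _ _ _ _ _ _ HV Hr)).
  assert (HWB : WBound mem0 m) by (intros r Hr; exact (proj1 (EncPhi_entry_le _ _ _ _ _ _ _ _ HW Hr))).
  assert (HW1B : W1Bound mem0 m) by (intros r Hr; exact (proj2 (EncPhi_entry_le _ _ _ _ _ _ _ _ HW Hr))).
  destruct (Prog_runs mem0 m Hm HVB HWB HW1B) as (t&mem'&Ht&Hh&HO).
  exists t, mem'. split; [exact Ht|]. split; [exact Hh|].
  exact (EncPhi_output M m n s1 s2 s3 mem0 H12 H23 HV HW mem' HO).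
Qed.
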